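(* Let $a\neq 0$ be a real number. On the space of entire functions $f(\alpha)$ of one complex variable, define the linear operators $$N=\frac{e^{a\alpha}-1}{a}\,\frac{d}{d\alpha},\quad A_+=\alpha,\quad A_-=e^{a\alpha}\frac{d}{d\alpha},\quad B_+=\Big(\frac{1-e^{-a\alpha}}{a}\Big)^2,\quad B_-=e^{a\alpha}\frac{d^2}{d\alpha^2},\quad M=1,$$ where functions of $\alpha$ act by multiplication. Then these operators satisfy the commutation relations $[N,A_+]=\frac{e^{aA_+}-1}{a}$, $[N,A_-]=-A_-$, $[A_-,A_+]=Me^{aA_+}$, $[N,B_+]=2B_+$, $[N,B_-]=-2B_--aA_-N$, $[B_-,B_+]=2(1+e^{-aA_+})N+2M-2aA_-B_+$, $[A_+,B_-]=-(1+e^{aA_+})A_-+a\,e^{aA_+}MN$, $[A_+,B_+]=0$, $[A_-,B_+]=2\frac{1-e^{-aA_+}}{a}$, $[A_-,B_-]=-aA_-^2$, and $[M,X]=0$ for each of these operators $X$.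
   Context: $[X,Y]=XY-YX$ denotes the commutator of operators, and $e^{cA_+}$ is the operator of multiplication by $e^{c\alpha}$. These relations are the commutation rules of the non-standard quantum two-photon algebra $U_{a}(h_6)$. *)

From Stdlib Require Import Reals ClassicalEpsilon.
From Coquelicot Require Import Coquelicot.

Open Scope C_scope.

Definition Cexp (z : C) : C :=
  (exp (Re z) * cos (Im z), exp (Re z) * sin (Im z))%R.

Definition Cderiv (f : C -> C) (z : C) : C :=
  epsilon (inhabits (RtoC 0))
    (fun l : C => @is_derive C_AbsRing C_NormedModule f z l).

Definition entire (f : C -> C) : Prop :=
  forall z : C, @ex_derive C_AbsRing C_NormedModule f z.

Definition op := (C -> C) -> (C -> C).

Definition compo (X Y : op) : op := fun f => X (Y f).
Definition addo (X Y : op) : op := fun f z => X f z + Y f z.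
Definition subo (X Y : op) : op := fun f z => X f z - Y f z.
Definition scalo (c : C) (X : op) : op := fun f z => c * X f z.
Definition zeroo : op := fun f z => RtoC 0.
Definition mulop (g : C -> C) : op := fun f z => g z * f z.
Definition comm (X Y : op) : op := subo (compo X Y) (compo Y X).

Definition D : op := Cderiv.

Section Ops.
Variable a : R.
Definition Nop : op := compo (mulop (fun z => (Cexp (RtoC a * z) - 1) / RtoC a)) D.
Definition Aplus : op := mulop (fun z => z).
Definition Aminus : op := compo (mulop (fun z => Cexp (RtoC a * z))) D.
Definition Bplus : op :=
  mulop (fun z => ((1 - Cexp (- (RtoC a * z))) / RtoC a) * ((1 - Cexp (- (RtoC a * z))) / RtoC a)).
Definition Bminus : op := compo (mulop (fun z => Cexp (RtoC a * z))) (compo D D).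
Definition Mop : op := mulop (fun _ => RtoC 1).
Definition expAplus (c : C) : op := mulop (fun z => Cexp (c * z)).
End Ops.

(* Applied to an entire f and evaluated at a point, each relation unfolds, by the product and
   chain rules, to an identity between rational expressions in e^{aα} and the derivatives of f
   up to order three, which [field] proves. The analytic content is that the derivative of an
   entire function is entire, proved along the classical route: Goursat's lemma by repeated
   quartering of triangles, then for triangles with a vertex at a point where the integrand is
   only continuous (cut off a small triangle at that vertex); such integrands therefore have
   primitives and vanishing integrals over the unit circle. Applied to the difference quotient
   of f this gives Cauchy's formula on the disc of radius 1/2, whose kernel can be differentiated
   under the integral sign, so f' is differentiable at 0, and everywhere by translation. *)

From Stdlib Require Import Reals Lra Lia ClassicalEpsilon FunctionalExtensionality.
From Coquelicot Require Import Coquelicot.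
Open Scope C_scope.

Ltac Cfield := apply injective_projections; simpl; field.

Lemma re_minus c d : Re (c - d) = (Re c - Re d)%R.
Proof. unfold Cminus. rewrite re_plus, re_opp. ring. Qed.

Lemma im_minus c d : Im (c - d) = (Im c - Im d)%R.
Proof. unfold Cminus. rewrite im_plus, im_opp. ring. Qed.

Lemma Rabs_Im_le_Cmod (c : C) : (Rabs (Im c) <= Cmod c)%R.
Proof. eapply Rle_trans; [apply Rmax_r | apply Rmax_Cmod]. Qed.

Lemma Cmod_le_Rabs_Re_Im (c : C) : (Cmod c <= Rabs (Re c) + Rabs (Im c))%R.
Proof.
  destruct c as [p q]; unfold Cmod; simpl.
  pose proof (Rabs_pos p); pose proof (Rabs_pos q).
  rewrite <- (sqrt_pow2 (Rabs p + Rabs q)) by lra.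
  apply sqrt_le_1_alt. simpl.
  assert (p * p = Rabs p * Rabs p)%R by (rewrite <- Rabs_mult; symmetry; apply Rabs_right; nra).
  assert (q * q = Rabs q * Rabs q)%R by (rewrite <- Rabs_mult; symmetry; apply Rabs_right; nra).
  nra.
Qed.

Lemma Cmod_minus_sym (x y : C) : Cmod (x - y) = Cmod (y - x).
Proof. replace (x - y) with (- (y - x)) by ring. apply Cmod_opp. Qed.

Lemma Cmod_triangle3 (x y z : C) : (Cmod (x + y + z) <= Cmod x + Cmod y + Cmod z)%R.
Proof. eapply Rle_trans; [apply Cmod_triangle|]. pose proof (Cmod_triangle x y). lra. Qed.

Lemma Cmod_minus_le (x y : C) : (Cmod (x - y) <= Cmod x + Cmod y)%R.
Proof. eapply Rle_trans; [apply Cmod_triangle|]. rewrite Cmod_opp. lra. Qed.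

Lemma Cmod_reverse_triangle (x y : C) : (Cmod x - Cmod y <= Cmod (x - y))%R.
Proof. pose proof (Cmod_triangle (x - y) y). replace (x - y + y) with x in H by ring. lra. Qed.

Lemma Cminus_neq_0 (w z : C) : w <> z -> w - z <> 0.
Proof. intros H E. apply H. replace w with (w - z + z) by ring. rewrite E. ring. Qed.

Lemma Cmod_RtoC_scal (r : R) (c : C) : (0 <= r)%R -> Cmod (RtoC r * c) = (r * Cmod c)%R.
Proof. intros Hr. rewrite Cmod_mult, Cmod_R, Rabs_right by lra. reflexivity. Qed.

Lemma Rlt_Rmin (x a b : R) : (x < Rmin a b)%R -> (x < a)%R /\ (x < b)%R.
Proof. intros H. split; eapply Rlt_le_trans; [exact H | apply Rmin_l | exact H | apply Rmin_r]. Qed.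

Lemma le_epsilon_R (x y : R) : (forall eps, (0 < eps)%R -> (x <= y + eps)%R) -> (x <= y)%R.
Proof.
  intros H. destruct (Rle_dec x y) as [|Hn]; [assumption|].
  specialize (H ((x - y) / 2)%R ltac:(lra)). lra.
Qed.

Lemma Cmod_le_epsilon (x : C) : (forall eps, (0 < eps)%R -> (Cmod x <= eps)%R) -> x = 0.
Proof.
  intros H. apply Cmod_eq_0, Rle_antisym; [|apply Cmod_ge_0].
  apply le_epsilon_R. intros eps Heps. rewrite Rplus_0_l. now apply H.
Qed.

(** * Complex differentiability *)

Definition Cdiff (f : C -> C) (z l : C) : Prop :=
  forall eps : R, (0 < eps)%R -> exists delta : R, (0 < delta)%R /\
    forall w, (Cmod (w - z) < delta)%R ->
      (Cmod (f w - f z - l * (w - z)) <= eps * Cmod (w - z))%R.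

Definition Ccont (g : C -> C) (z : C) : Prop :=
  forall eps : R, (0 < eps)%R -> exists delta : R, (0 < delta)%R /\
    forall w, (Cmod (w - z) < delta)%R -> (Cmod (g w - g z) < eps)%R.

Lemma is_derive_Cdiff f z l : @is_derive C_AbsRing C_NormedModule f z l -> Cdiff f z l.
Proof.
  intros [_ H] eps Heps.
  destruct (H z (fun P HP => HP) (mkposreal eps Heps)) as [d Hd].
  exists d. split; [apply cond_pos|]. intros w Hw.
  rewrite (Cmult_comm l). apply Hd.
  now apply (@norm_compat1 C_AbsRing (AbsRing_NormedModule C_AbsRing)).
Qed.

Lemma Cdiff_is_derive f z l : Cdiff f z l -> @is_derive C_AbsRing C_NormedModule f z l.
Proof.
  intros H. split; [apply is_linear_scal_l|].
  intros x Hx.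
  apply (@is_filter_lim_locally_unique C_AbsRing (AbsRing_NormedModule C_AbsRing)) in Hx.
  subst x. intros eps.
  set (nf := @norm_factor C_AbsRing (AbsRing_NormedModule C_AbsRing)).
  assert (Hnf : (0 < nf)%R) by apply norm_factor_gt_0.
  destruct (H eps (cond_pos eps)) as [d [Hd H']].
  assert (Hp : (0 < d / nf)%R) by (apply Rdiv_lt_0_compat; assumption).
  exists (mkposreal _ Hp). intros y Hy.
  apply (@norm_compat2 C_AbsRing (AbsRing_NormedModule C_AbsRing)) in Hy. simpl in Hy.
  specialize (H' y). rewrite (Cmult_comm l) in H'. apply H'.
  replace d with (nf * (d / nf))%R by (field; lra). exact Hy.
Qed.

(* Coquelicot's product and chain rules use the second normed-module structure on [C]. *)
Lemma is_derive_abs_ring_iff f z l :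
  @is_derive C_AbsRing C_NormedModule f z l <->
  @is_derive C_AbsRing (AbsRing_NormedModule C_AbsRing) f z l.
Proof. split; intros [_ H]; (split; [apply is_linear_scal_l | exact H]). Qed.

Lemma Cdiff_abs_ring_iff f z l :
  Cdiff f z l <-> @is_derive C_AbsRing (AbsRing_NormedModule C_AbsRing) f z l.
Proof.
  rewrite <- is_derive_abs_ring_iff. split; [apply Cdiff_is_derive | apply is_derive_Cdiff].
Qed.

Lemma Cdiff_unique f z l1 l2 : Cdiff f z l1 -> Cdiff f z l2 -> l1 = l2.
Proof.
  intros H1 H2. apply Cdiff_is_derive, is_C_derive_unique in H1.
  apply Cdiff_is_derive, is_C_derive_unique in H2. congruence.
Qed.

Lemma Cdiff_D f z l : Cdiff f z l -> D f z = l.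
Proof.
  intros H. unfold D, Cderiv.
  apply (Cdiff_unique f z); [|exact H]. apply is_derive_Cdiff.
  apply (epsilon_spec (inhabits (RtoC 0)) (fun l => @is_derive C_AbsRing C_NormedModule f z l)).
  exists l. now apply Cdiff_is_derive.
Qed.

Lemma entire_Cdiff f z : entire f -> Cdiff f z (D f z).
Proof.
  intros Hf. destruct (Hf z) as [l Hl]. apply is_derive_Cdiff in Hl.
  now rewrite (Cdiff_D f z l Hl).
Qed.

Lemma D_eq_of_Cdiff h h' : (forall z, Cdiff h z (h' z)) -> D h = h'.
Proof. intros H. apply functional_extensionality. intros z. apply Cdiff_D, H. Qed.

Lemma Cdiff_eq f z l1 l2 : l1 = l2 -> Cdiff f z l1 -> Cdiff f z l2.
Proof. now intros ->. Qed.

Lemma Cdiff_ext_loc f h z l r : (0 < r)%R ->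
  (forall w, (Cmod (w - z) < r)%R -> f w = h w) -> Cdiff h z l -> Cdiff f z l.
Proof.
  intros Hr Heq H eps Heps. destruct (H eps Heps) as [d [Hd H']].
  exists (Rmin d r). split; [now apply Rmin_pos|].
  intros w Hw. rewrite (Heq w), (Heq z).
  - apply H'. eapply Rlt_le_trans; [exact Hw | apply Rmin_l].
  - unfold Cminus; rewrite Cplus_opp_r, Cmod_0; lra.
  - eapply Rlt_le_trans; [exact Hw | apply Rmin_r].
Qed.

Lemma Cdiff_Ccont f z l : Cdiff f z l -> Ccont f z.
Proof.
  intros H eps Heps. destruct (H 1%R Rlt_0_1) as [d [Hd H']].
  set (K := (Cmod l + 2)%R). assert (HK : (0 < K)%R) by (pose proof (Cmod_ge_0 l); unfold K; lra).
  exists (Rmin d (eps / K)). split; [apply Rmin_pos; [lra | now apply Rdiv_lt_0_compat]|].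
  intros w Hw.
  assert (Hw1 : (Cmod (w - z) < d)%R) by (eapply Rlt_le_trans; [exact Hw | apply Rmin_l]).
  assert (Hw2 : (Cmod (w - z) * K < eps)%R).
  { apply (Rmult_lt_reg_r (/ K)); [now apply Rinv_0_lt_compat|].
    rewrite Rmult_assoc, Rinv_r, Rmult_1_r by lra.
    eapply Rlt_le_trans; [exact Hw | apply Rmin_r]. }
  specialize (H' w Hw1).
  replace (f w - f z) with ((f w - f z - l * (w - z)) + l * (w - z)) by ring.
  eapply Rle_lt_trans; [apply Cmod_triangle|]. rewrite Cmod_mult.
  pose proof (Cmod_ge_0 l); pose proof (Cmod_ge_0 (w - z)). unfold K in Hw2. nra.
Qed.

Lemma Ccont_const (c z : C) : Ccont (fun _ => c) z.
Proof.
  intros eps Heps. exists 1%R. split; [lra|]. intros w _.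
  unfold Cminus. rewrite Cplus_opp_r, Cmod_0. exact Heps.
Qed.

Lemma Ccont_minus f g z : Ccont f z -> Ccont g z -> Ccont (fun w => f w - g w) z.
Proof.
  intros H1 H2 eps Heps.
  destruct (H1 (eps / 2)%R ltac:(lra)) as [d1 [Hd1 H1']].
  destruct (H2 (eps / 2)%R ltac:(lra)) as [d2 [Hd2 H2']].
  exists (Rmin d1 d2). split; [now apply Rmin_pos|]. intros w Hw. apply Rlt_Rmin in Hw as [Hw1 Hw2].
  replace (f w - g w - (f z - g z)) with ((f w - f z) - (g w - g z)) by ring.
  eapply Rle_lt_trans; [apply Cmod_minus_le|].
  specialize (H1' w Hw1). specialize (H2' w Hw2). lra.
Qed.

Lemma Cdiff_const (c z : C) : Cdiff (fun _ => c) z 0.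
Proof.
  intros eps Heps. exists 1%R. split; [lra|]. intros w _.
  replace (c - c - 0 * (w - z)) with (RtoC 0) by ring. rewrite Cmod_0.
  pose proof (Cmod_ge_0 (w - z)). nra.
Qed.

Lemma Cdiff_id (z : C) : Cdiff (fun w => w) z 1.
Proof.
  intros eps Heps. exists 1%R. split; [lra|]. intros w _.
  replace (w - z - 1 * (w - z)) with (RtoC 0) by ring. rewrite Cmod_0.
  pose proof (Cmod_ge_0 (w - z)). nra.
Qed.

Lemma Cdiff_plus f g z lf lg :
  Cdiff f z lf -> Cdiff g z lg -> Cdiff (fun w => f w + g w) z (lf + lg).
Proof.
  intros H1 H2. apply is_derive_Cdiff.
  apply (is_derive_plus (K:=C_AbsRing) (V:=C_NormedModule)); now apply Cdiff_is_derive.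
Qed.

Lemma Cdiff_mult f g z lf lg :
  Cdiff f z lf -> Cdiff g z lg -> Cdiff (fun w => f w * g w) z (lf * g z + f z * lg).
Proof.
  rewrite !Cdiff_abs_ring_iff. intros H1 H2.
  apply (is_derive_mult (K:=C_AbsRing)); [exact H1 | exact H2 | intros; apply Cmult_comm].
Qed.

Lemma Cdiff_comp f g z lf lg :
  Cdiff f (g z) lf -> Cdiff g z lg -> Cdiff (fun w => f (g w)) z (lg * lf).
Proof.
  intros H1 H2. apply is_derive_Cdiff. apply Cdiff_is_derive in H1.
  apply Cdiff_abs_ring_iff in H2.
  exact (is_derive_comp (K:=C_AbsRing) (V:=C_NormedModule) f g z lf lg H1 H2).
Qed.

Lemma Cdiff_opp f z l : Cdiff f z l -> Cdiff (fun w => - f w) z (- l).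
Proof.
  intros H eps Heps. destruct (H eps Heps) as [d [Hd H']]. exists d. split; [exact Hd|].
  intros w Hw. replace (- f w - - f z - - l * (w - z)) with (- (f w - f z - l * (w - z))) by ring.
  rewrite Cmod_opp. now apply H'.
Qed.

Lemma Cdiff_minus f g z lf lg :
  Cdiff f z lf -> Cdiff g z lg -> Cdiff (fun w => f w - g w) z (lf - lg).
Proof. intros H1 H2. apply (Cdiff_plus f (fun w => - g w)); [exact H1 | now apply Cdiff_opp]. Qed.

Lemma Cdiff_div_const f (c : C) z l : Cdiff f z l -> Cdiff (fun w => f w / c) z (l / c).
Proof.
  intros H. apply (Cdiff_eq _ _ (l * / c + f z * 0)); [unfold Cdiv; ring|].
  apply (Cdiff_mult f (fun _ => / c)); [exact H | apply Cdiff_const].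
Qed.

Lemma Cdiff_inv (w0 : C) : w0 <> 0 -> Cdiff (fun w => / w) w0 (- / (w0 * w0)).
Proof.
  intros Hw0 eps Heps. set (m := Cmod w0).
  assert (Hm : (0 < m)%R) by now apply Cmod_gt_0.
  exists (Rmin (m / 2) (eps * (m * m * m) / 2)). split.
  { apply Rmin_pos; [lra|]. apply Rdiv_lt_0_compat; [|lra].
    repeat apply Rmult_lt_0_compat; lra. }
  intros w Hw.
  assert (Hw1 : (Cmod (w - w0) < m / 2)%R) by (eapply Rlt_le_trans; [exact Hw | apply Rmin_l]).
  assert (Hw2 : (Cmod (w - w0) < eps * (m * m * m) / 2)%R)
    by (eapply Rlt_le_trans; [exact Hw | apply Rmin_r]).
  assert (Hmw : (m / 2 < Cmod w)%R).
  { pose proof (Cmod_reverse_triangle w0 w). rewrite Cmod_minus_sym in H. unfold m in *. lra. }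
  assert (Hwn : w <> 0) by (intros ->; rewrite Cmod_0 in Hmw; lra).
  replace (/ w - / w0 - - / (w0 * w0) * (w - w0)) with ((w - w0) * (w - w0) / (w * (w0 * w0)))
    by (field; now split).
  rewrite Cmod_div by (repeat apply Cmult_neq_0; assumption). rewrite !Cmod_mult. fold m.
  pose proof (Cmod_ge_0 (w - w0)).
  assert (Hden : (0 < Cmod w * (m * m))%R) by (apply Rmult_lt_0_compat; nra).
  apply (Rmult_le_reg_r (Cmod w * (m * m))); [exact Hden|].
  unfold Rdiv. rewrite Rmult_assoc, Rinv_l, Rmult_1_r by lra.
  assert (Cmod (w - w0) <= eps * (Cmod w * (m * m)))%R by nra.
  nra.
Qed.

Lemma Cexp_add z h : Cexp (z + h) = Cexp z * Cexp h.
Proof.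
  destruct z as [x y], h as [u v]. unfold Cexp, Cmult, Cplus; simpl.
  rewrite exp_plus, cos_plus, sin_plus. apply injective_projections; simpl; ring.
Qed.

Lemma Cexp_0 : Cexp 0 = 1.
Proof.
  unfold Cexp; simpl. rewrite exp_0, cos_0, sin_0. apply injective_projections; simpl; ring.
Qed.

Lemma Cexp_nz z : Cexp z <> 0.
Proof.
  intros E. apply C1_nz. rewrite <- Cexp_0.
  replace (Cexp 0) with (Cexp (z + - z)) by (f_equal; ring).
  now rewrite Cexp_add, E, Cmult_0_l.
Qed.

Lemma Cexp_opp z : Cexp (- z) = / Cexp z.
Proof.
  assert (H : Cexp z * Cexp (- z) = 1).
  { rewrite <- Cexp_add, <- Cexp_0. f_equal. ring. }
  rewrite <- (Cmult_1_r (/ Cexp z)), <- H. field. apply Cexp_nz.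
Qed.

Lemma Cexp_opp_mult x y : Cexp (- x * y) = / Cexp (x * y).
Proof. rewrite <- Cexp_opp. f_equal. ring. Qed.

Lemma derivable_pt_lim_bound f x l : derivable_pt_lim f x l ->
  forall eps, (0 < eps)%R -> exists d, (0 < d)%R /\ forall h, (Rabs h < d)%R ->
    (Rabs (f (x + h) - f x - l * h) <= eps * Rabs h)%R.
Proof.
  intros H eps Heps. destruct (H eps Heps) as [d Hd]. exists d. split; [apply cond_pos|].
  intros h Hh. destruct (Req_dec h 0) as [->|E].
  - rewrite Rplus_0_r, Rabs_R0. replace (f x - f x - l * 0)%R with 0%R by ring.
    rewrite Rabs_R0. lra.
  - replace (f (x + h) - f x - l * h)%R with (((f (x + h) - f x) / h - l) * h)%R by now field.
    rewrite Rabs_mult. apply Rmult_le_compat_r; [apply Rabs_pos|]. now apply Rlt_le, Hd.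
Qed.

Lemma Cdiff_Cexp_0 : Cdiff Cexp 0 1.
Proof.
  intros eps Heps. set (e := Rmin (eps / 8) 1).
  assert (He : (0 < e)%R) by (apply Rmin_pos; lra).
  assert (He8 : (e <= eps / 8)%R) by apply Rmin_l.
  assert (He1 : (e <= 1)%R) by apply Rmin_r.
  assert (Hexp := derivable_pt_lim_exp 0). rewrite exp_0 in Hexp.
  assert (Hcos := derivable_pt_lim_cos 0). rewrite sin_0, Ropp_0 in Hcos.
  assert (Hsin := derivable_pt_lim_sin 0). rewrite cos_0 in Hsin.
  destruct (derivable_pt_lim_bound _ _ _ Hexp e He) as [d1 [Hd1 H1]].
  destruct (derivable_pt_lim_bound _ _ _ Hcos e He) as [d2 [Hd2 H2]].
  destruct (derivable_pt_lim_bound _ _ _ Hsin e He) as [d3 [Hd3 H3]].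
  exists (Rmin (Rmin d1 d2) (Rmin d3 (e / 2))). split.
  { repeat apply Rmin_pos; lra. }
  intros [x y] Hh. replace ((x, y) - 0) with (x, y) in * by Cfield.
  destruct (Rlt_Rmin _ _ _ Hh) as [Hh12 Hh3]. apply Rlt_Rmin in Hh12, Hh3.
  pose proof (re_le_Cmod (x, y)) as Hx. pose proof (Rabs_Im_le_Cmod (x, y)) as Hy. simpl in Hx, Hy.
  specialize (H1 x ltac:(lra)). specialize (H2 y ltac:(lra)). specialize (H3 y ltac:(lra)).
  rewrite Rplus_0_l, exp_0 in H1. rewrite Rplus_0_l, cos_0 in H2. rewrite Rplus_0_l, sin_0 in H3.
  assert (Hex : (0 < exp x <= 3)%R).
  { split; [apply exp_pos|]. eapply Rle_trans; [|apply exp_le_3].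
    apply Rlt_le, exp_increasing. pose proof (Rle_abs x). lra. }
  assert (Hex1 : (Rabs (exp x - 1) <= e)%R).
  { replace (exp x - 1)%R with ((exp x - 1 - 1 * x) + x)%R by ring.
    eapply Rle_trans; [apply Rabs_triang|]. pose proof (Rabs_pos x). nra. }
  replace (Cexp (x, y) - Cexp 0 - 1 * (x, y))
    with ((exp x - 1 - 1 * x) + exp x * (cos y - 1 - 0 * y),
          exp x * (sin y - 0 - 1 * y) + (exp x - 1) * y)%R
    by (unfold Cexp; simpl; rewrite exp_0, cos_0, sin_0; apply injective_projections; simpl; ring).
  eapply Rle_trans; [apply Cmod_le_Rabs_Re_Im|]. simpl.
  pose proof (Rabs_pos x); pose proof (Rabs_pos y); pose proof (Rabs_pos (exp x - 1)).
  assert (Hre : (Rabs ((exp x - 1 - 1 * x) + exp x * (cos y - 1 - 0 * y))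
                  <= e * Rabs x + 3 * (e * Rabs y))%R).
  { eapply Rle_trans; [apply Rabs_triang|]. rewrite Rabs_mult, (Rabs_right (exp x)) by lra.
    pose proof (Rabs_pos (cos y - 1 - 0 * y)). nra. }
  assert (Him : (Rabs (exp x * (sin y - 0 - 1 * y) + (exp x - 1) * y)
                  <= 3 * (e * Rabs y) + e * Rabs y)%R).
  { eapply Rle_trans; [apply Rabs_triang|]. rewrite !Rabs_mult, (Rabs_right (exp x)) by lra.
    pose proof (Rabs_pos (sin y - 0 - 1 * y)). nra. }
  nra.
Qed.

Lemma Cdiff_Cexp z : Cdiff Cexp z (Cexp z).
Proof.
  apply (Cdiff_ext_loc _ (fun w => Cexp z * Cexp (w - z)) z _ 1); [lra| |].
  { intros w _. rewrite <- Cexp_add. f_equal. ring. }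
  apply (Cdiff_eq _ _ (0 * Cexp (z - z) + Cexp z * ((1 - 0) * 1))); [ring|].
  apply (Cdiff_mult (fun _ => Cexp z) (fun w => Cexp (w - z))); [apply Cdiff_const|].
  apply (Cdiff_comp Cexp (fun w => w - z)).
  - replace (z - z) with (RtoC 0) by ring. exact Cdiff_Cexp_0.
  - apply Cdiff_minus; [apply Cdiff_id | apply Cdiff_const].
Qed.

(** * Curves and their integrals *)

Definition RCcont (phi : R -> C) (t : R) : Prop :=
  forall eps : R, (0 < eps)%R -> exists delta : R, (0 < delta)%R /\
    forall s, (Rabs (s - t) < delta)%R -> (Cmod (phi s - phi t) < eps)%R.

Definition RCdiff (phi : R -> C) (t : R) (l : C) : Prop :=
  forall eps : R, (0 < eps)%R -> exists delta : R, (0 < delta)%R /\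
    forall s, (Rabs (s - t) < delta)%R ->
      (Cmod (phi s - phi t - RtoC (s - t) * l) <= eps * Rabs (s - t))%R.

Definition CInt (phi : R -> C) (a b : R) : C :=
  (RInt (fun t => Re (phi t)) a b, RInt (fun t => Im (phi t)) a b).

Definition ex_CInt (phi : R -> C) (a b : R) : Prop :=
  ex_RInt (fun t => Re (phi t)) a b /\ ex_RInt (fun t => Im (phi t)) a b.

Section Component.
Variable pr : C -> R.
Hypothesis pr_minus : forall c d, pr (c - d) = (pr c - pr d)%R.
Hypothesis pr_scal : forall (r : R) c, pr (RtoC r * c) = (r * pr c)%R.
Hypothesis pr_le_Cmod : forall c, (Rabs (pr c) <= Cmod c)%R.

Lemma RCcont_component phi t : RCcont phi t -> continuous (fun s => pr (phi s)) t.
Proof.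
  intros H. apply continuity_pt_filterlim. intros eps Heps.
  destruct (H eps Heps) as [d [Hd H']]. exists d. split; [exact Hd|].
  intros s [_ Hs]. simpl in *. unfold R_dist in *. rewrite <- pr_minus.
  eapply Rle_lt_trans; [apply pr_le_Cmod | now apply H'].
Qed.

Lemma RCdiff_component phi t l : RCdiff phi t l -> is_derive (fun s => pr (phi s)) t (pr l).
Proof.
  intros H. apply is_derive_Reals. intros eps Heps.
  destruct (H (eps / 2)%R ltac:(lra)) as [d [Hd H']]. exists (mkposreal d Hd).
  intros h Hh0 Hh. simpl in Hh.
  specialize (H' (t + h)%R). replace (t + h - t)%R with h in H' by ring. specialize (H' Hh).
  replace ((pr (phi (t + h)%R) - pr (phi t)) / h - pr l)%R
    with (pr (phi (t + h)%R - phi t - RtoC h * l) / h)%R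
    by (rewrite !pr_minus, pr_scal; field; exact Hh0).
  assert (Hh1 : (0 < Rabs h)%R) by now apply Rabs_pos_lt.
  unfold Rdiv. rewrite Rabs_mult, Rabs_inv.
  apply (Rmult_lt_reg_r (Rabs h)); [exact Hh1|].
  rewrite Rmult_assoc, Rinv_l by lra.
  pose proof (pr_le_Cmod (phi (t + h)%R - phi t - RtoC h * l)). nra.
Qed.

End Component.

Lemma RCcont_Re phi t : RCcont phi t -> continuous (fun s => Re (phi s)) t.
Proof. apply RCcont_component; [apply re_minus | apply re_le_Cmod]. Qed.
Lemma RCcont_Im phi t : RCcont phi t -> continuous (fun s => Im (phi s)) t.
Proof. apply RCcont_component; [apply im_minus | apply Rabs_Im_le_Cmod]. Qed.
Lemma RCdiff_Re phi t l : RCdiff phi t l -> is_derive (fun s => Re (phi s)) t (Re l).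
Proof. apply RCdiff_component; [apply re_minus | apply re_scal_l | apply re_le_Cmod]. Qed.
Lemma RCdiff_Im phi t l : RCdiff phi t l -> is_derive (fun s => Im (phi s)) t (Im l).
Proof. apply RCdiff_component; [apply im_minus | apply im_scal_l | apply Rabs_Im_le_Cmod]. Qed.

Lemma RCdiff_of_components phi t l :
  derivable_pt_lim (fun s => Re (phi s)) t (Re l) ->
  derivable_pt_lim (fun s => Im (phi s)) t (Im l) -> RCdiff phi t l.
Proof.
  intros H1 H2 eps Heps.
  destruct (derivable_pt_lim_bound _ _ _ H1 (eps / 2)%R ltac:(lra)) as [d1 [Hd1 H1']].
  destruct (derivable_pt_lim_bound _ _ _ H2 (eps / 2)%R ltac:(lra)) as [d2 [Hd2 H2']].
  exists (Rmin d1 d2). split; [now apply Rmin_pos|]. intros s Hs. apply Rlt_Rmin in Hs.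
  specialize (H1' (s - t)%R ltac:(lra)). specialize (H2' (s - t)%R ltac:(lra)).
  replace (t + (s - t))%R with s in H1', H2' by ring.
  eapply Rle_trans; [apply Cmod_le_Rabs_Re_Im|].
  rewrite re_minus, re_minus, re_scal_l, im_minus, im_minus, im_scal_l.
  rewrite (Rmult_comm (s - t) (Re l)), (Rmult_comm (s - t) (Im l)). lra.
Qed.

Lemma RCdiff_RCcont phi t l : RCdiff phi t l -> RCcont phi t.
Proof.
  intros H eps Heps. destruct (H 1%R Rlt_0_1) as [d [Hd H']].
  set (K := (Cmod l + 2)%R). assert (HK : (0 < K)%R) by (pose proof (Cmod_ge_0 l); unfold K; lra).
  exists (Rmin d (eps / K)). split; [apply Rmin_pos; [lra | now apply Rdiv_lt_0_compat]|].
  intros s Hs. apply Rlt_Rmin in Hs as [Hs1 Hs2].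
  assert (Hs3 : (Rabs (s - t) * K < eps)%R).
  { apply (Rmult_lt_reg_r (/ K)); [now apply Rinv_0_lt_compat|].
    rewrite Rmult_assoc, Rinv_r, Rmult_1_r by lra. exact Hs2. }
  specialize (H' s Hs1).
  replace (phi s - phi t) with ((phi s - phi t - RtoC (s - t) * l) + RtoC (s - t) * l) by ring.
  eapply Rle_lt_trans; [apply Cmod_triangle|]. rewrite Cmod_mult, Cmod_R.
  pose proof (Rabs_pos (s - t)); pose proof (Cmod_ge_0 l). unfold K in Hs3. nra.
Qed.

Lemma RCcont_const (c : C) t : RCcont (fun _ => c) t.
Proof.
  intros eps Heps. exists 1%R. split; [lra|]. intros s _.
  unfold Cminus. rewrite Cplus_opp_r, Cmod_0. exact Heps.
Qed.

Lemma RCcont_RtoC t : RCcont RtoC t.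
Proof.
  intros eps Heps. exists eps. split; [exact Heps|]. intros s Hs.
  now rewrite <- RtoC_minus, Cmod_R.
Qed.

Lemma RCcont_plus phi psi t :
  RCcont phi t -> RCcont psi t -> RCcont (fun s => phi s + psi s) t.
Proof.
  intros H1 H2 eps Heps.
  destruct (H1 (eps / 2)%R ltac:(lra)) as [d1 [Hd1 H1']].
  destruct (H2 (eps / 2)%R ltac:(lra)) as [d2 [Hd2 H2']].
  exists (Rmin d1 d2). split; [now apply Rmin_pos|]. intros s Hs. apply Rlt_Rmin in Hs as [Hs1 Hs2].
  replace (phi s + psi s - (phi t + psi t)) with ((phi s - phi t) + (psi s - psi t)) by ring.
  eapply Rle_lt_trans; [apply Cmod_triangle|].
  specialize (H1' s Hs1). specialize (H2' s Hs2). lra.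
Qed.

Lemma RCcont_mult phi psi t :
  RCcont phi t -> RCcont psi t -> RCcont (fun s => phi s * psi s) t.
Proof.
  intros H1 H2 eps Heps.
  set (A := (Cmod (phi t) + 1)%R). set (B := (Cmod (psi t) + 1)%R).
  pose proof (Cmod_ge_0 (phi t)); pose proof (Cmod_ge_0 (psi t)).
  set (e := Rmin 1 (eps / (A + B + 1))).
  assert (He : (0 < e)%R) by (apply Rmin_pos; [lra | apply Rdiv_lt_0_compat; unfold A, B; lra]).
  assert (He1 : (e <= 1)%R) by apply Rmin_l.
  assert (He2 : (e * (A + B + 1) <= eps)%R).
  { apply (Rmult_le_reg_r (/ (A + B + 1))); [apply Rinv_0_lt_compat; unfold A, B; lra|].
    rewrite Rmult_assoc, Rinv_r, Rmult_1_r by (unfold A, B; lra). apply Rmin_r. }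
  destruct (H1 e He) as [d1 [Hd1 H1']]. destruct (H2 e He) as [d2 [Hd2 H2']].
  exists (Rmin d1 d2). split; [now apply Rmin_pos|]. intros s Hs. apply Rlt_Rmin in Hs as [Hs1 Hs2].
  specialize (H1' s Hs1). specialize (H2' s Hs2).
  replace (phi s * psi s - phi t * psi t) with
    ((phi s - phi t) * (psi s - psi t) + (phi s - phi t) * psi t + phi t * (psi s - psi t)) by ring.
  eapply Rle_lt_trans; [apply Cmod_triangle3|]. rewrite !Cmod_mult.
  pose proof (Cmod_ge_0 (phi s - phi t)); pose proof (Cmod_ge_0 (psi s - psi t)).
  unfold A, B in *. nra.
Qed.

Lemma RCcont_minus phi psi t :
  RCcont phi t -> RCcont psi t -> RCcont (fun s => phi s - psi s) t.
Proof.
  intros H1 H2. apply (RCcont_plus phi (fun s => - psi s)); [exact H1|].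
  intros eps Heps. destruct (RCcont_mult (fun _ => -1) psi t (RCcont_const _ t) H2 eps Heps)
    as [d [Hd H']].
  exists d. split; [exact Hd|]. intros s Hs.
  replace (- psi s - - psi t) with (-1 * psi s - -1 * psi t) by ring. now apply H'.
Qed.

Lemma RCcont_comp (g : C -> C) phi t :
  Ccont g (phi t) -> RCcont phi t -> RCcont (fun s => g (phi s)) t.
Proof.
  intros H1 H2 eps Heps. destruct (H1 eps Heps) as [d1 [Hd1 H1']].
  destruct (H2 d1 Hd1) as [d2 [Hd2 H2']]. exists d2. split; [exact Hd2|].
  intros s Hs. now apply H1', H2'.
Qed.

Lemma RCcont_inv (phi : R -> C) t : phi t <> 0 -> RCcont phi t -> RCcont (fun s => / phi s) t.
Proof.
  intros H0 H. apply (RCcont_comp (fun w => / w)); [|exact H].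
  exact (Cdiff_Ccont _ _ _ (Cdiff_inv _ H0)).
Qed.

Lemma RCdiff_comp (G : C -> C) gam t l v :
  Cdiff G (gam t) l -> RCdiff gam t v -> RCdiff (fun s => G (gam s)) t (v * l).
Proof.
  intros HG Hg eps Heps.
  set (Kv := (Cmod v + 1)%R). set (Kl := (Cmod l + 1)%R).
  assert (HKv : (0 < Kv)%R) by (pose proof (Cmod_ge_0 v); unfold Kv; lra).
  assert (HKl : (0 < Kl)%R) by (pose proof (Cmod_ge_0 l); unfold Kl; lra).
  destruct (HG (eps / (2 * Kv))%R ltac:(apply Rdiv_lt_0_compat; lra)) as [d1 [Hd1 H1]].
  destruct (Hg (eps / (2 * Kl))%R ltac:(apply Rdiv_lt_0_compat; lra)) as [d2 [Hd2 H2]].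
  destruct (Hg 1%R Rlt_0_1) as [d3 [Hd3 H3]].
  exists (Rmin (Rmin d2 d3) (d1 / Kv)). split.
  { repeat apply Rmin_pos; try lra. now apply Rdiv_lt_0_compat. }
  intros s Hs. apply Rlt_Rmin in Hs as [Hs23 Hs1]. apply Rlt_Rmin in Hs23 as [Hs2 Hs3].
  specialize (H2 s Hs2). specialize (H3 s Hs3).
  pose proof (Rabs_pos (s - t)) as Hp.
  assert (Hgs : (Cmod (gam s - gam t) <= Kv * Rabs (s - t))%R).
  { replace (gam s - gam t) with ((gam s - gam t - RtoC (s - t) * v) + RtoC (s - t) * v) by ring.
    eapply Rle_trans; [apply Cmod_triangle|]. rewrite Cmod_mult, Cmod_R. unfold Kv. nra. }
  assert (Hgs1 : (Cmod (gam s - gam t) < d1)%R).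
  { eapply Rle_lt_trans; [exact Hgs|].
    apply (Rmult_lt_compat_l Kv) in Hs1; [|lra].
    replace (Kv * (d1 / Kv))%R with d1 in Hs1 by (field; lra). exact Hs1. }
  specialize (H1 (gam s) Hgs1).
  replace (G (gam s) - G (gam t) - RtoC (s - t) * (v * l)) with
    ((G (gam s) - G (gam t) - l * (gam s - gam t)) + l * (gam s - gam t - RtoC (s - t) * v))
    by ring.
  eapply Rle_trans; [apply Cmod_triangle|]. rewrite Cmod_mult.
  assert (E1 : (eps / (2 * Kv) * Cmod (gam s - gam t) <= eps / 2 * Rabs (s - t))%R).
  { apply Rle_trans with (eps / (2 * Kv) * (Kv * Rabs (s - t)))%R.
    - apply Rmult_le_compat_l; [apply Rlt_le, Rdiv_lt_0_compat; lra | exact Hgs].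
    - right. field. lra. }
  assert (E2 : (Cmod l * Cmod (gam s - gam t - RtoC (s - t) * v) <= eps / 2 * Rabs (s - t))%R).
  { apply Rle_trans with (Kl * (eps / (2 * Kl) * Rabs (s - t)))%R.
    - apply Rmult_le_compat; [apply Cmod_ge_0 | apply Cmod_ge_0 | unfold Kl; lra | exact H2].
    - right. field. lra. }
  lra.
Qed.

Lemma ex_CInt_RCcont phi a b :
  (forall t, (Rmin a b <= t <= Rmax a b)%R -> RCcont phi t) -> ex_CInt phi a b.
Proof.
  intros H. split; apply (ex_RInt_continuous (V:=R_CompleteNormedModule)); intros z Hz.
  - now apply RCcont_Re, H.
  - now apply RCcont_Im, H.
Qed.

Lemma ex_CInt_scal (c : C) phi a b : ex_CInt phi a b -> ex_CInt (fun t => c * phi t) a b.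
Proof.
  intros [H1 H2]. destruct c as [c1 c2]. split; simpl.
  - apply (ex_RInt_minus (V:=R_CompleteNormedModule));
      now apply (ex_RInt_scal (V:=R_CompleteNormedModule)).
  - apply (ex_RInt_plus (V:=R_CompleteNormedModule));
      now apply (ex_RInt_scal (V:=R_CompleteNormedModule)).
Qed.

Lemma ex_CInt_minus phi psi a b :
  ex_CInt phi a b -> ex_CInt psi a b -> ex_CInt (fun t => phi t - psi t) a b.
Proof.
  intros [H1 H2] [H3 H4].
  split; simpl; apply (ex_RInt_plus (V:=R_CompleteNormedModule)); try assumption;
    now apply (ex_RInt_opp (V:=R_CompleteNormedModule)).
Qed.

Lemma CInt_scal (c : C) phi a b :
  ex_CInt phi a b -> CInt (fun t => c * phi t) a b = c * CInt phi a b.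
Proof.
  intros [H1 H2]. unfold CInt. destruct c as [c1 c2]. apply injective_projections; simpl.
  - rewrite (RInt_minus (V:=R_CompleteNormedModule))
      by now apply (ex_RInt_scal (V:=R_CompleteNormedModule)).
    now rewrite !(RInt_scal (V:=R_CompleteNormedModule)).
  - rewrite (RInt_plus (V:=R_CompleteNormedModule))
      by now apply (ex_RInt_scal (V:=R_CompleteNormedModule)).
    now rewrite !(RInt_scal (V:=R_CompleteNormedModule)).
Qed.

Lemma CInt_minus phi psi a b : ex_CInt phi a b -> ex_CInt psi a b ->
  CInt (fun t => phi t - psi t) a b = CInt phi a b - CInt psi a b.
Proof.
  intros [H1 H2] [H3 H4]. unfold CInt. apply injective_projections; simpl;
    rewrite (RInt_plus (V:=R_CompleteNormedModule)), (RInt_opp (V:=R_CompleteNormedModule));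
    try reflexivity; try assumption; now apply (ex_RInt_opp (V:=R_CompleteNormedModule)).
Qed.

Lemma CInt_const (c : C) a b : CInt (fun _ => c) a b = c * RtoC (b - a).
Proof.
  unfold CInt. rewrite !(RInt_const).
  destruct c. apply injective_projections; simpl; unfold scal; simpl; unfold mult; simpl; ring.
Qed.

Lemma CInt_ext phi psi a b : (forall t, (Rmin a b <= t <= Rmax a b)%R -> phi t = psi t) ->
  CInt phi a b = CInt psi a b.
Proof.
  intros H. unfold CInt. f_equal; apply RInt_ext; intros x Hx; rewrite H; try reflexivity; lra.
Qed.

Lemma CInt_Chasles phi a b c : ex_CInt phi a b -> ex_CInt phi b c ->
  CInt phi a b + CInt phi b c = CInt phi a c.
Proof.
  intros [H1 H2] [H3 H4]. unfold CInt. apply injective_projections; simpl.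
  - exact (RInt_Chasles _ a b c H1 H3).
  - exact (RInt_Chasles _ a b c H2 H4).
Qed.

Lemma CInt_point phi a : CInt phi a a = 0.
Proof. unfold CInt. now rewrite !(RInt_point). Qed.

Lemma CInt_swap phi a b : ex_CInt phi a b -> CInt phi b a = - CInt phi a b.
Proof.
  intros [H1 H2]. unfold CInt.
  rewrite <- (opp_RInt_swap _ a b H1).
  rewrite <- (opp_RInt_swap _ a b H2).
  apply injective_projections; simpl; unfold opp; simpl; ring.
Qed.

Lemma CInt_comp_lin phi (u v a b : R) : ex_CInt phi (u * a + v) (u * b + v) ->
  CInt (fun t => RtoC u * phi (u * t + v)%R) a b = CInt phi (u * a + v) (u * b + v).
Proof.
  intros [H1 H2]. unfold CInt.
  rewrite <- (RInt_comp_lin _ u v a b H1).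
  rewrite <- (RInt_comp_lin _ u v a b H2).
  f_equal; apply RInt_ext; intros t _; rewrite ?re_scal_l, ?im_scal_l; reflexivity.
Qed.

Lemma CInt_bound phi a b M : (a <= b)%R -> ex_CInt phi a b ->
  (forall t, (a <= t <= b)%R -> (Cmod (phi t) <= M)%R) ->
  (Cmod (CInt phi a b) <= 2 * (b - a) * M)%R.
Proof.
  intros Hab [H1 H2] HM. eapply Rle_trans; [apply Cmod_le_Rabs_Re_Im|]. simpl.
  assert (B1 : (Rabs (RInt (fun t => Re (phi t)) a b) <= (b - a) * M)%R).
  { apply abs_RInt_le_const; [exact Hab | exact H1|].
    intros t Ht. eapply Rle_trans; [apply re_le_Cmod | now apply HM]. }
  assert (B2 : (Rabs (RInt (fun t => Im (phi t)) a b) <= (b - a) * M)%R).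
  { apply abs_RInt_le_const; [exact Hab | exact H2|].
    intros t Ht. eapply Rle_trans; [apply Rabs_Im_le_Cmod | now apply HM]. }
  lra.
Qed.

Lemma CInt_FTC Phi dPhi a b :
  (forall t, (Rmin a b <= t <= Rmax a b)%R -> RCdiff Phi t (dPhi t)) ->
  (forall t, (Rmin a b <= t <= Rmax a b)%R -> RCcont dPhi t) ->
  CInt dPhi a b = Phi b - Phi a.
Proof.
  intros H1 H2. unfold CInt. apply injective_projections; simpl; apply is_RInt_unique.
  - apply (is_RInt_derive (fun s => Re (Phi s))).
    + intros; now apply RCdiff_Re, H1.
    + intros; now apply RCcont_Re, H2.
  - apply (is_RInt_derive (fun s => Im (Phi s))).
    + intros; now apply RCdiff_Im, H1.
    + intros; now apply RCcont_Im, H2.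
Qed.

Definition circle (t : R) : C := (cos t, sin t).

Lemma RCdiff_circle t : RCdiff circle t (Ci * circle t).
Proof.
  apply RCdiff_of_components; unfold circle; simpl.
  - replace (0 * cos t - 1 * sin t)%R with (- sin t)%R by ring. apply derivable_pt_lim_cos.
  - replace (0 * sin t + 1 * cos t)%R with (cos t) by ring. apply derivable_pt_lim_sin.
Qed.

Lemma RCcont_circle t : RCcont circle t.
Proof. exact (RCdiff_RCcont _ _ _ (RCdiff_circle t)). Qed.

Lemma Cmod_circle t : Cmod (circle t) = 1%R.
Proof.
  unfold Cmod, circle; simpl. rewrite !Rmult_1_r.
  rewrite <- sqrt_1. f_equal. pose proof (sin2_cos2 t). unfold Rsqr in H. lra.
Qed.

Lemma circle_2PI : circle (2 * PI) = circle 0.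
Proof. unfold circle. now rewrite cos_2PI, sin_2PI, cos_0, sin_0. Qed.

(** * Integrals along segments and triangles *)

Definition seg_int (g : C -> C) (p q : C) : C :=
  CInt (fun t => g (p + RtoC t * (q - p))) 0 1 * (q - p).

Definition tri_int (g : C -> C) (a b c : C) : C := seg_int g a b + seg_int g b c + seg_int g c a.

Lemma RCcont_line (p u : C) t : RCcont (fun s => p + RtoC s * u) t.
Proof.
  apply RCcont_plus; [apply RCcont_const|].
  apply RCcont_mult; [apply RCcont_RtoC | apply RCcont_const].
Qed.

Lemma ex_CInt_line g p u a b : (forall w, Ccont g w) -> ex_CInt (fun t => g (p + RtoC t * u)) a b.
Proof.
  intros Hg. apply ex_CInt_RCcont. intros t _.
  apply (RCcont_comp g (fun s => p + RtoC s * u)); [apply Hg | apply RCcont_line].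
Qed.

Lemma seg_int_line g p u x1 x2 q1 q2 : (forall w, Ccont g w) ->
  q1 = p + RtoC x1 * u -> q2 = p + RtoC x2 * u ->
  seg_int g q1 q2 = u * CInt (fun x => g (p + RtoC x * u)) x1 x2.
Proof.
  intros Hg -> ->. unfold seg_int.
  set (h := fun x : R => g (p + RtoC x * u)). set (v := (x2 - x1)%R).
  assert (Eh : (fun t : R => h (v * t + x1)%R)
               = fun t => g (p + RtoC x1 * u + RtoC t * (RtoC v * u)))
    by (apply functional_extensionality; intros t; unfold h, v; f_equal; Cfield).
  assert (E := CInt_comp_lin h v x1 0 1).
  replace (v * 0 + x1)%R with x1 in E by ring.
  replace (v * 1 + x1)%R with x2 in E by (unfold v; ring).
  rewrite <- E, CInt_scal, Eh by (try rewrite Eh; now apply ex_CInt_line).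
  replace (p + RtoC x2 * u - (p + RtoC x1 * u)) with (RtoC v * u) by (unfold v; Cfield).
  ring.
Qed.

Lemma seg_int_split g p q r : (forall w, Ccont g w) ->
  seg_int g p q = seg_int g p (p + RtoC r * (q - p)) + seg_int g (p + RtoC r * (q - p)) q.
Proof.
  intros Hg.
  set (m := p + RtoC r * (q - p)).
  rewrite (seg_int_line g p (q - p) 0 1 p q), (seg_int_line g p (q - p) 0 r p m),
    (seg_int_line g p (q - p) r 1 m q) by (auto; unfold m; Cfield).
  rewrite <- (CInt_Chasles _ 0 r 1) by now apply ex_CInt_line. ring.
Qed.

Lemma seg_int_swap g p q : (forall w, Ccont g w) -> seg_int g q p = - seg_int g p q.
Proof.
  intros Hg.
  rewrite (seg_int_line g p (q - p) 0 1 p q), (seg_int_line g p (q - p) 1 0 q p) by (auto; Cfield).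
  rewrite CInt_swap by now apply ex_CInt_line. ring.
Qed.

Lemma tri_int_collinear g p u x y z a b c : (forall w, Ccont g w) ->
  a = p + RtoC x * u -> b = p + RtoC y * u -> c = p + RtoC z * u -> tri_int g a b c = 0.
Proof.
  intros Hg Ha Hb Hc. unfold tri_int.
  rewrite (seg_int_line g p u x y a b), (seg_int_line g p u y z b c),
    (seg_int_line g p u z x c a) by assumption.
  rewrite <- !Cmult_plus_distr_l.
  rewrite (CInt_Chasles _ x y z), (CInt_Chasles _ x z x), CInt_point by now apply ex_CInt_line.
  ring.
Qed.

Lemma seg_int_primitive F g p q : (forall w, Cdiff F w (g w)) -> (forall w, Ccont g w) ->
  seg_int g p q = F q - F p.
Proof.
  intros HF Hg. unfold seg_int.
  rewrite Cmult_comm, <- CInt_scal by now apply ex_CInt_line.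
  replace (F q - F p) with (F (p + RtoC 1 * (q - p)) - F (p + RtoC 0 * (q - p)))
    by (f_equal; f_equal; ring).
  apply (CInt_FTC (fun t => F (p + RtoC t * (q - p)))); intros t _.
  - apply (RCdiff_comp F (fun s => p + RtoC s * (q - p))); [apply HF|].
    intros eps Heps. exists 1%R. split; [lra|]. intros s _.
    replace (p + RtoC s * (q - p) - (p + RtoC t * (q - p)) - RtoC (s - t) * (q - p)) with (RtoC 0)
      by Cfield.
    rewrite Cmod_0. pose proof (Rabs_pos (s - t)). nra.
  - apply RCcont_mult; [apply RCcont_const|].
    apply (RCcont_comp g (fun s => p + RtoC s * (q - p))); [apply Hg | apply RCcont_line].
Qed.

Lemma tri_int_primitive F g a b c : (forall w, Cdiff F w (g w)) -> (forall w, Ccont g w) ->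
  tri_int g a b c = 0.
Proof. intros HF Hg. unfold tri_int. rewrite !(seg_int_primitive F) by assumption. ring. Qed.

Lemma Ccont_affine (al be : C) w : Ccont (fun w => al + be * w) w.
Proof.
  apply (Cdiff_Ccont _ _ (0 + (0 * w + be * 1))).
  apply Cdiff_plus; [apply Cdiff_const|].
  apply Cdiff_mult; [apply Cdiff_const | apply Cdiff_id].
Qed.

Lemma tri_int_affine al be a b c : tri_int (fun w => al + be * w) a b c = 0.
Proof.
  apply (tri_int_primitive (fun w => al * w + be * (w * w) / 2)); [intros z | apply Ccont_affine].
  apply (Cdiff_eq _ _ ((0 * z + al * 1) + (0 * (z * z) + be * (1 * z + z * 1)) / 2)); [field|].
  apply (Cdiff_plus (fun w => al * w) (fun w => be * (w * w) / 2)).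
  - apply Cdiff_mult; [apply Cdiff_const | apply Cdiff_id].
  - apply (Cdiff_div_const (fun w => be * (w * w))).
    apply (Cdiff_mult (fun _ => be) (fun w => w * w)); [apply Cdiff_const|].
    apply (Cdiff_mult (fun w => w) (fun w => w)); apply Cdiff_id.
Qed.

Lemma seg_int_minus g1 g2 p q : (forall w, Ccont g1 w) -> (forall w, Ccont g2 w) ->
  seg_int (fun w => g1 w - g2 w) p q = seg_int g1 p q - seg_int g2 p q.
Proof.
  intros H1 H2. unfold seg_int.
  rewrite (CInt_minus (fun t => g1 (p + RtoC t * (q - p)))) by now apply ex_CInt_line.
  ring.
Qed.

Lemma tri_int_minus g1 g2 a b c : (forall w, Ccont g1 w) -> (forall w, Ccont g2 w) ->
  tri_int (fun w => g1 w - g2 w) a b c = tri_int g1 a b c - tri_int g2 a b c.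
Proof. intros H1 H2. unfold tri_int. rewrite !seg_int_minus by assumption. ring. Qed.

Lemma seg_int_bound g (p q : C) M : (forall w, Ccont g w) ->
  (forall t, (0 <= t <= 1)%R -> (Cmod (g (p + RtoC t * (q - p))%C) <= M)%R) ->
  (Cmod (seg_int g p q) <= 2 * Cmod (q - p) * M)%R.
Proof.
  intros Hg HM. unfold seg_int. rewrite Cmod_mult.
  assert (E := CInt_bound _ 0 1 M ltac:(lra) (ex_CInt_line g p (q - p) 0 1 Hg) HM).
  pose proof (Cmod_ge_0 (q - p)). nra.
Qed.

Lemma Cmod_segment_le (p q z : C) t K : (0 <= t <= 1)%R ->
  (Cmod (p - z) <= K)%R -> (Cmod (q - z) <= K)%R -> (Cmod (p + RtoC t * (q - p) - z) <= K)%R.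
Proof.
  intros Ht Hp Hq.
  replace (p + RtoC t * (q - p) - z) with (RtoC (1 - t) * (p - z) + RtoC t * (q - z)) by Cfield.
  eapply Rle_trans; [apply Cmod_triangle|].
  rewrite !Cmod_RtoC_scal by lra. nra.
Qed.

Lemma seg_int_bound_ball g z r M p q : (forall w, Ccont g w) ->
  (forall w, (Cmod (w - z) <= r)%R -> (Cmod (g w) <= M)%R) ->
  (Cmod (p - z) <= r)%R -> (Cmod (q - z) <= r)%R ->
  (Cmod (seg_int g p q) <= 2 * Cmod (q - p) * M)%R.
Proof.
  intros Hg HM Hp Hq. apply seg_int_bound; [exact Hg|].
  intros t Ht. now apply HM, Cmod_segment_le.
Qed.

Lemma tri_int_bound_ball g z r M a b c : (forall w, Ccont g w) ->
  (forall w, (Cmod (w - z) <= r)%R -> (Cmod (g w) <= M)%R) ->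
  (Cmod (a - z) <= r)%R -> (Cmod (b - z) <= r)%R -> (Cmod (c - z) <= r)%R ->
  (Cmod (tri_int g a b c) <= 2 * M * (Cmod (b - a) + Cmod (c - b) + Cmod (a - c)))%R.
Proof.
  intros Hg HM Ha Hb Hc. unfold tri_int. eapply Rle_trans; [apply Cmod_triangle3|].
  pose proof (seg_int_bound_ball g z r M a b Hg HM Ha Hb).
  pose proof (seg_int_bound_ball g z r M b c Hg HM Hb Hc).
  pose proof (seg_int_bound_ball g z r M c a Hg HM Hc Ha).
  lra.
Qed.

Lemma seg_int_const (k p q : C) : seg_int (fun _ => k) p q = k * (q - p).
Proof. unfold seg_int. rewrite CInt_const. replace (1 - 0)%R with 1%R by ring. ring. Qed.

(** * Goursat's lemma *)

Record triangle := Triangle { ta : C; tb : C; tc : C }.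

Definition tri_integral (g : C -> C) (T : triangle) : C := tri_int g (ta T) (tb T) (tc T).

Definition perimeter (T : triangle) : R :=
  (Cmod (ta T - tb T) + Cmod (tb T - tc T) + Cmod (tc T - ta T))%R.

Definition vertices_in (P : C -> Prop) (T : triangle) : Prop := P (ta T) /\ P (tb T) /\ P (tc T).

Definition mid (x y : C) : C := x + RtoC (/ 2) * (y - x).

Definition corner_a T := Triangle (ta T) (mid (ta T) (tb T)) (mid (tc T) (ta T)).
Definition corner_b T := Triangle (mid (ta T) (tb T)) (tb T) (mid (tb T) (tc T)).
Definition corner_c T := Triangle (mid (tc T) (ta T)) (mid (tb T) (tc T)) (tc T).
Definition medial T := Triangle (mid (tb T) (tc T)) (mid (tc T) (ta T)) (mid (ta T) (tb T)).

Lemma tri_integral_subdivide g T : (forall w, Ccont g w) ->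
  tri_integral g T = tri_integral g (corner_a T) + tri_integral g (corner_b T)
                     + tri_integral g (corner_c T) + tri_integral g (medial T).
Proof.
  intros Hg. destruct T as [a b c].
  unfold tri_integral, corner_a, corner_b, corner_c, medial, tri_int, mid; cbn [ta tb tc].
  rewrite (seg_int_split g a b (/ 2)), (seg_int_split g b c (/ 2)), (seg_int_split g c a (/ 2))
    by exact Hg.
  rewrite (seg_int_swap g (c + RtoC (/ 2) * (a - c)) (a + RtoC (/ 2) * (b - a))),
    (seg_int_swap g (a + RtoC (/ 2) * (b - a)) (b + RtoC (/ 2) * (c - b))),
    (seg_int_swap g (b + RtoC (/ 2) * (c - b)) (c + RtoC (/ 2) * (a - c))) by exact Hg.
  ring.
Qed.

Definition heavy_quarter g T : triangle :=
  let big Q := Rle_dec (Cmod (tri_integral g T) / 4) (Cmod (tri_integral g Q)) in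
  if big (corner_a T) then corner_a T else
  if big (corner_b T) then corner_b T else
  if big (corner_c T) then corner_c T else medial T.

Lemma heavy_quarter_integral g T : (forall w, Ccont g w) ->
  (Cmod (tri_integral g T) / 4 <= Cmod (tri_integral g (heavy_quarter g T)))%R.
Proof.
  intros Hg. unfold heavy_quarter.
  destruct (Rle_dec _ _); [assumption|]. destruct (Rle_dec _ _); [assumption|].
  destruct (Rle_dec _ _); [assumption|].
  destruct (Rle_dec (Cmod (tri_integral g T) / 4) (Cmod (tri_integral g (medial T))));
    [assumption|].
  exfalso. rewrite (tri_integral_subdivide g T Hg) in *.
  pose proof (Cmod_triangle3 (tri_integral g (corner_a T)) (tri_integral g (corner_b T))
    (tri_integral g (corner_c T))).
  pose proof (Cmod_triangle (tri_integral g (corner_a T) + tri_integral g (corner_b T)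
    + tri_integral g (corner_c T)) (tri_integral g (medial T))).
  lra.
Qed.

Lemma Cmod_half_diff (x y u v : C) : x - y = RtoC (/ 2) * (u - v) ->
  Cmod (x - y) = (/ 2 * Cmod (u - v))%R.
Proof. intros ->. apply Cmod_RtoC_scal. lra. Qed.

Lemma perimeter_quarters T :
  perimeter (corner_a T) = (perimeter T / 2)%R /\ perimeter (corner_b T) = (perimeter T / 2)%R /\
  perimeter (corner_c T) = (perimeter T / 2)%R /\ perimeter (medial T) = (perimeter T / 2)%R.
Proof.
  destruct T as [a b c].
  unfold perimeter, corner_a, corner_b, corner_c, medial, mid; cbn [ta tb tc].
  set (ab := a + RtoC (/ 2) * (b - a)). set (bc := b + RtoC (/ 2) * (c - b)).
  set (ca := c + RtoC (/ 2) * (a - c)).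
  rewrite (Cmod_half_diff a ab a b), (Cmod_half_diff ab ca b c), (Cmod_half_diff ca a c a),
    (Cmod_half_diff ab b a b), (Cmod_half_diff b bc b c), (Cmod_half_diff bc ab c a),
    (Cmod_half_diff ca bc a b), (Cmod_half_diff bc c b c), (Cmod_half_diff c ca c a),
    (Cmod_half_diff bc ca b a), (Cmod_half_diff ca ab c b), (Cmod_half_diff ab bc a c)
    by (unfold ab, bc, ca; Cfield).
  rewrite (Cmod_minus_sym b a), (Cmod_minus_sym c b), (Cmod_minus_sym a c).
  repeat split; field.
Qed.

Lemma perimeter_heavy_quarter g T : perimeter (heavy_quarter g T) = (perimeter T / 2)%R.
Proof.
  destruct (perimeter_quarters T) as [? [? [? ?]]]. unfold heavy_quarter.
  repeat destruct (Rle_dec _ _); assumption.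
Qed.

Lemma perimeter_ge_0 T : (0 <= perimeter T)%R.
Proof.
  unfold perimeter. pose proof (Cmod_ge_0 (ta T - tb T)). pose proof (Cmod_ge_0 (tb T - tc T)).
  pose proof (Cmod_ge_0 (tc T - ta T)). lra.
Qed.

Lemma Cmod_sides_le_perimeter T :
  (Cmod (tb T - ta T) <= perimeter T)%R /\ (Cmod (tc T - ta T) <= perimeter T)%R.
Proof.
  unfold perimeter. pose proof (Cmod_ge_0 (ta T - tb T)). pose proof (Cmod_ge_0 (tb T - tc T)).
  pose proof (Cmod_ge_0 (tc T - ta T)). rewrite (Cmod_minus_sym (tb T)). lra.
Qed.

Lemma heavy_quarter_ta g T : (Cmod (ta (heavy_quarter g T) - ta T) <= perimeter T)%R.
Proof.
  destruct (Cmod_sides_le_perimeter T) as [H1 H2].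
  pose proof (Cmod_ge_0 (tb T - ta T)). pose proof (Cmod_ge_0 (tc T - ta T)).
  unfold heavy_quarter; repeat destruct (Rle_dec _ _); destruct T as [a b c];
    unfold corner_a, corner_b, corner_c, medial, mid in *; cbn [ta tb tc] in *.
  - replace (a - a) with (RtoC 0) by ring. rewrite Cmod_0. lra.
  - replace (a + RtoC (/ 2) * (b - a) - a) with (RtoC (/ 2) * (b - a)) by ring.
    rewrite Cmod_RtoC_scal by lra. lra.
  - replace (c + RtoC (/ 2) * (a - c) - a) with (RtoC (/ 2) * (c - a)) by Cfield.
    rewrite Cmod_RtoC_scal by lra. lra.
  - replace (b + RtoC (/ 2) * (c - b) - a) with (RtoC (/ 2) * (b - a) + RtoC (/ 2) * (c - a))
      by Cfield.
    eapply Rle_trans; [apply Cmod_triangle|]. rewrite !Cmod_RtoC_scal by lra. lra.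
Qed.

Lemma heavy_quarter_vertices_in g T (P : C -> Prop) : (forall x y, P x -> P y -> P (mid x y)) ->
  vertices_in P T -> vertices_in P (heavy_quarter g T).
Proof.
  intros HP [Ha [Hb Hc]]. unfold heavy_quarter, vertices_in.
  repeat destruct (Rle_dec _ _); unfold corner_a, corner_b, corner_c, medial; cbn [ta tb tc];
    repeat split; auto.
Qed.

Lemma pow_half_small K eps : (0 < eps)%R ->
  exists N, forall n, (N <= n)%nat -> (K * (/ 2) ^ n < eps)%R.
Proof.
  intros Heps. pose proof (Rabs_pos K).
  destruct (pow_lt_1_zero (/ 2) ltac:(rewrite Rabs_right; lra) (eps / (Rabs K + 1)))
    as [N HN]; [apply Rdiv_lt_0_compat; lra|].
  exists N. intros n Hn. specialize (HN n Hn).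
  assert (Hp : (0 < (/ 2) ^ n)%R) by (apply pow_lt; lra).
  rewrite Rabs_right in HN by lra.
  apply Rle_lt_trans with ((Rabs K + 1) * (/ 2) ^ n)%R.
  - pose proof (Rle_abs K). nra.
  - apply (Rmult_lt_compat_l (Rabs K + 1)) in HN; [|lra].
    replace ((Rabs K + 1) * (eps / (Rabs K + 1)))%R with eps in HN by (field; lra). exact HN.
Qed.

Lemma Rseq_geometric_limit (u : nat -> R) K :
  (forall n m, (n <= m)%nat -> (Rabs (u m - u n) <= K * (/ 2) ^ n)%R) ->
  exists l, forall n, (Rabs (u n - l) <= K * (/ 2) ^ n)%R.
Proof.
  intros Hu.
  assert (Hc : Cauchy_crit u).
  { intros eps Heps. destruct (pow_half_small K eps Heps) as [N HN]. exists N.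
    intros n m Hn Hm. unfold Rdist. destruct (Nat.le_ge_cases n m) as [Hnm|Hnm].
    - rewrite Rabs_minus_sym. eapply Rle_lt_trans; [apply Hu, Hnm | now apply HN].
    - eapply Rle_lt_trans; [apply Hu, Hnm | now apply HN]. }
  destruct (Rcomplete.R_complete u Hc) as [l Hl]. exists l. intros n.
  apply le_epsilon_R. intros eps Heps. destruct (Hl eps Heps) as [N HN].
  specialize (HN (Nat.max n N) ltac:(lia)). specialize (Hu n (Nat.max n N) ltac:(lia)).
  unfold Rdist in HN.
  replace (u n - l)%R with (- (u (Nat.max n N) - u n) + (u (Nat.max n N) - l))%R by ring.
  eapply Rle_trans; [apply Rabs_triang|]. rewrite Rabs_Ropp. lra.
Qed.

Lemma Cseq_geometric_limit (x : nat -> C) K :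
  (forall n m, (n <= m)%nat -> (Cmod (x m - x n) <= K * (/ 2) ^ n)%R) ->
  exists p, forall n, (Cmod (x n - p) <= 2 * K * (/ 2) ^ n)%R.
Proof.
  intros Hx.
  destruct (Rseq_geometric_limit (fun n => Re (x n)) K) as [l1 H1].
  { intros n m H. rewrite <- re_minus. eapply Rle_trans; [apply re_le_Cmod | now apply Hx]. }
  destruct (Rseq_geometric_limit (fun n => Im (x n)) K) as [l2 H2].
  { intros n m H. rewrite <- im_minus. eapply Rle_trans; [apply Rabs_Im_le_Cmod | now apply Hx]. }
  exists (l1, l2). intros n. eapply Rle_trans; [apply Cmod_le_Rabs_Re_Im|].
  rewrite re_minus, im_minus. specialize (H1 n). specialize (H2 n). simpl in *. lra.
Qed.

Lemma tri_integral_near_point g p l eps d T : (forall w, Ccont g w) -> (0 <= eps)%R ->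
  (forall w, (Cmod (w - p) < d)%R -> (Cmod (g w - g p - l * (w - p)) <= eps * Cmod (w - p))%R) ->
  (Cmod (ta T - p) + perimeter T < d)%R ->
  (Cmod (tri_integral g T) <= 2 * (eps * (Cmod (ta T - p) + perimeter T)) * perimeter T)%R.
Proof.
  intros Hg Heps Hl Hd. set (r := (Cmod (ta T - p) + perimeter T)%R).
  set (A := fun w => (g p - l * p) + l * w).
  assert (E : tri_integral g T = tri_int (fun w => g w - A w) (ta T) (tb T) (tc T)).
  { rewrite tri_int_minus by (auto; intros; apply Ccont_affine).
    unfold A. rewrite tri_int_affine. unfold tri_integral. ring. }
  assert (Hball : forall w, (Cmod (w - ta T) <= perimeter T)%R -> (Cmod (g w - A w) <= eps * r)%R).
  { intros w Hw.
    assert (Hwp : (Cmod (w - p) <= r)%R).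
    { replace (w - p) with ((w - ta T) + (ta T - p)) by ring.
      eapply Rle_trans; [apply Cmod_triangle|]. unfold r. lra. }
    unfold A. replace (g w - (g p - l * p + l * w)) with (g w - g p - l * (w - p)) by ring.
    eapply Rle_trans; [apply Hl; unfold r in *; lra|]. now apply Rmult_le_compat_l. }
  assert (Ha : (Cmod (ta T - ta T) <= perimeter T)%R).
  { replace (ta T - ta T) with (RtoC 0) by ring. rewrite Cmod_0. apply perimeter_ge_0. }
  destruct (Cmod_sides_le_perimeter T) as [Hb Hc].
  rewrite E. eapply Rle_trans.
  { apply (tri_int_bound_ball _ (ta T) (perimeter T) (eps * r));
      [|exact Hball | exact Ha | exact Hb | exact Hc].
    intros; apply Ccont_minus; [apply Hg | apply Ccont_affine]. }
  unfold perimeter.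
  rewrite (Cmod_minus_sym (tb T) (ta T)), (Cmod_minus_sym (tc T) (tb T)),
    (Cmod_minus_sym (ta T) (tc T)).
  lra.
Qed.

Section Goursat.

Variable g : C -> C.
Hypothesis g_cont : forall w, Ccont g w.
Variable P : C -> Prop.
Hypothesis P_mid : forall x y, P x -> P y -> P (mid x y).
Hypothesis P_closed :
  forall p, (forall eps, (0 < eps)%R -> exists w, P w /\ (Cmod (w - p) < eps)%R) -> P p.
Hypothesis P_diff : forall w, P w -> exists l, Cdiff g w l.
Variable T0 : triangle.
Hypothesis T0_in_P : vertices_in P T0.

Let nested (n : nat) : triangle := Nat.iter n (heavy_quarter g) T0.

Let nested_S n : nested (S n) = heavy_quarter g (nested n).
Proof. reflexivity. Qed.

Let nested_perimeter n : perimeter (nested n) = (perimeter T0 * (/ 2) ^ n)%R.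
Proof.
  induction n as [|n IH]; [simpl; ring|].
  rewrite nested_S, perimeter_heavy_quarter, IH. simpl. field.
Qed.

Let nested_integral n :
  (Cmod (tri_integral g T0) * ((/ 2) ^ n * (/ 2) ^ n) <= Cmod (tri_integral g (nested n)))%R.
Proof.
  induction n as [|n IH]; [simpl; lra|].
  rewrite nested_S. eapply Rle_trans; [|now apply heavy_quarter_integral]. simpl. lra.
Qed.

Let nested_in_P n : vertices_in P (nested n).
Proof.
  induction n as [|n IH]; [exact T0_in_P|].
  rewrite nested_S. now apply heavy_quarter_vertices_in.
Qed.

Let nested_ta n m : (n <= m)%nat ->
  (Cmod (ta (nested m) - ta (nested n)) <= 2 * perimeter T0 * (/ 2) ^ n)%R.
Proof.
  intros H. replace m with (n + (m - n))%nat by lia. generalize (m - n)%nat as k.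
  assert (Hk : forall k, (Cmod (ta (nested (n + k)) - ta (nested n))
      <= 2 * perimeter T0 * (/ 2) ^ n - 2 * perimeter T0 * (/ 2) ^ (n + k))%R).
  { induction k as [|k IH].
    - rewrite Nat.add_0_r. replace (ta (nested n) - ta (nested n)) with (RtoC 0) by ring.
      rewrite Cmod_0. lra.
    - rewrite Nat.add_succ_r.
      rewrite nested_S.
      replace (ta (heavy_quarter g (nested (n + k))) - ta (nested n)) with
        ((ta (heavy_quarter g (nested (n + k))) - ta (nested (n + k)))
         + (ta (nested (n + k)) - ta (nested n))) by ring.
      eapply Rle_trans; [apply Cmod_triangle|].
      pose proof (heavy_quarter_ta g (nested (n + k))) as Hq. rewrite nested_perimeter in Hq.
      simpl. lra. }
  intros k. eapply Rle_trans; [apply Hk|].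
  pose proof (pow_lt (/ 2) (n + k) ltac:(lra)). pose proof (perimeter_ge_0 T0). nra.
Qed.

Theorem goursat : tri_integral g T0 = 0.
Proof.
  set (per0 := perimeter T0). assert (Hper0 : (0 <= per0)%R) by apply perimeter_ge_0.
  destruct (Cseq_geometric_limit (fun n => ta (nested n)) (2 * per0)) as [p Hp];
    [intros; now apply nested_ta|].
  assert (HPp : P p).
  { apply P_closed. intros eps Heps. destruct (pow_half_small (2 * (2 * per0)) eps Heps) as [N HN].
    exists (ta (nested N)). split; [apply nested_in_P|].
    eapply Rle_lt_trans; [apply Hp | now apply HN]. }
  destruct (P_diff p HPp) as [l Hl].
  apply Cmod_le_epsilon. intros eps Heps.
  set (e := (eps / (10 * (per0 * per0) + 1))%R).
  assert (He : (0 < e)%R) by (apply Rdiv_lt_0_compat; nra).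
  destruct (Hl e He) as [d [Hd Hl']].
  destruct (pow_half_small (5 * per0) d Hd) as [N HN]. specialize (HN N (le_n N)).
  set (h := ((/ 2) ^ N)%R). assert (Hh : (0 < h)%R) by (apply pow_lt; lra).
  assert (Hta : (Cmod (ta (nested N) - p) <= 4 * per0 * h)%R)
    by (pose proof (Hp N) as HpN; cbv beta in HpN; fold h in HpN; lra).
  assert (Hper : perimeter (nested N) = (per0 * h)%R) by apply nested_perimeter.
  assert (Hloc := tri_integral_near_point g p l e d (nested N) g_cont ltac:(lra) Hl'
    ltac:(fold h in HN; lra)).
  assert (Hlow := nested_integral N). fold h in Hlow.
  rewrite Hper in Hloc.
  assert (Hfar : (2 * (e * (Cmod (ta (nested N) - p) + per0 * h)) * (per0 * h)
      <= 2 * (e * (5 * per0 * h)) * (per0 * h))%R).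
  { apply Rmult_le_compat_r; [nra|]. apply Rmult_le_compat_l; [lra|].
    apply Rmult_le_compat_l; lra. }
  assert (Cmod (tri_integral g T0) * (h * h) <= (10 * e * (per0 * per0)) * (h * h))%R by nra.
  apply Rmult_le_reg_r in H; [|nra].
  assert (e * (10 * (per0 * per0) + 1) = eps)%R by (unfold e; field; nra).
  nra.
Qed.

End Goursat.

(** * Primitives of functions holomorphic off one point *)

Definition cross (x y : C) : R := (Re x * Im y - Im x * Re y)%R.

Lemma Rabs_cross_le x y : (Rabs (cross x y) <= 2 * Cmod x * Cmod y)%R.
Proof.
  unfold cross. eapply Rle_trans; [apply Rabs_triang|]. rewrite Rabs_Ropp, !Rabs_mult.
  pose proof (re_le_Cmod x); pose proof (Rabs_Im_le_Cmod x).
  pose proof (re_le_Cmod y); pose proof (Rabs_Im_le_Cmod y).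
  pose proof (Rabs_pos (Re x)); pose proof (Rabs_pos (Im x)).
  pose proof (Rabs_pos (Re y)); pose proof (Rabs_pos (Im y)).
  assert (Rabs (Re x) * Rabs (Im y) <= Cmod x * Cmod y)%R by (apply Rmult_le_compat; lra).
  assert (Rabs (Im x) * Rabs (Re y) <= Cmod x * Cmod y)%R by (apply Rmult_le_compat; lra).
  lra.
Qed.

Lemma cross_real_multiple (u v : C) : u <> 0 -> cross u v = 0%R -> v = RtoC (Re (v / u)) * u.
Proof.
  intros Hu Hc. transitivity ((v / u) * u); [field; exact Hu|]. f_equal.
  apply injective_projections; [reflexivity|].
  unfold cross in Hc. destruct u as [u1 u2], v as [v1 v2]. simpl in *.
  assert (Hn : (u1 * u1 + u2 * u2 <> 0)%R).
  { intros E. apply Hu. apply injective_projections; simpl; nra. }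
  replace (u1 * (u1 * 1) + u2 * (u2 * 1))%R with (u1 * u1 + u2 * u2)%R by ring.
  replace (v1 * (- u2 / (u1 * u1 + u2 * u2)) + v2 * (u1 / (u1 * u1 + u2 * u2)))%R
    with ((u1 * v2 - u2 * v1) / (u1 * u1 + u2 * u2))%R by (field; exact Hn).
  rewrite Hc. unfold Rdiv. ring.
Qed.

Lemma cross_level_closed (z k p : C) (D lam : R) : D <> 0%R ->
  (forall eps, (0 < eps)%R -> exists w, (lam <= cross (w - z) k / D)%R /\ (Cmod (w - p) < eps)%R) ->
  (lam <= cross (p - z) k / D)%R.
Proof.
  intros HD Hp. apply le_epsilon_R. intros e He.
  assert (HDa : (0 < Rabs D)%R) by now apply Rabs_pos_lt.
  pose proof (Cmod_ge_0 k).
  destruct (Hp (e * Rabs D / (2 * Cmod k + 1))%R) as [w [Hw1 Hw2]].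
  { apply Rdiv_lt_0_compat; [apply Rmult_lt_0_compat|]; lra. }
  assert (E : (cross (w - z) k / D - cross (p - z) k / D = cross (w - p) k / D)%R)
    by (unfold cross; simpl; field; exact HD).
  assert (B : (Rabs (cross (w - p) k / D) * Rabs D <= 2 * Cmod (w - p) * Cmod k)%R).
  { unfold Rdiv. rewrite Rabs_mult, Rabs_inv, Rmult_assoc, Rinv_l, Rmult_1_r by lra.
    apply Rabs_cross_le. }
  assert (B2 : (Cmod (w - p) * (2 * Cmod k + 1) < e * Rabs D)%R).
  { apply (Rmult_lt_compat_r (2 * Cmod k + 1)) in Hw2; [|lra].
    replace (e * Rabs D / (2 * Cmod k + 1) * (2 * Cmod k + 1))%R with (e * Rabs D)%R
      in Hw2 by (field; lra). exact Hw2. }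
  assert (Rabs (cross (w - p) k / D) < e)%R.
  { apply (Rmult_lt_reg_r (Rabs D)); [exact HDa|]. pose proof (Cmod_ge_0 (w - p)). nra. }
  pose proof (Rle_abs (cross (w - p) k / D)). lra.
Qed.

Lemma tri_int_shrink g z u v : (forall w, Ccont g w) -> forall eps, (0 < eps)%R ->
  exists lam, (0 < lam <= 1)%R /\
    (Cmod (tri_int g z (z + RtoC lam * u) (z + RtoC lam * v)) <= eps)%R.
Proof.
  intros Hg eps Heps. destruct (Hg z 1%R Rlt_0_1) as [d [Hd Hdz]].
  set (K := (Cmod (g z) + 1)%R). set (S := (Cmod u + Cmod (v - u) + Cmod v + 1)%R).
  pose proof (Cmod_ge_0 u); pose proof (Cmod_ge_0 v); pose proof (Cmod_ge_0 (v - u)).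
  assert (HK : (0 < K)%R) by (pose proof (Cmod_ge_0 (g z)); unfold K; lra).
  assert (HS : (0 < S)%R) by (unfold S; lra).
  set (lam := Rmin 1 (Rmin (d / (2 * S)) (eps / (2 * S * K)))).
  assert (Hl0 : (0 < lam)%R).
  { repeat apply Rmin_pos; try lra; apply Rdiv_lt_0_compat; try lra.
    apply Rmult_lt_0_compat; lra. }
  assert (Hl1 : (lam <= 1)%R) by apply Rmin_l.
  assert (Hl2 : (lam * S <= d / 2)%R).
  { assert (Hd2 : (lam <= d / (2 * S))%R) by (eapply Rle_trans; [apply Rmin_r | apply Rmin_l]).
    apply (Rmult_le_compat_r S) in Hd2; [|lra].
    replace (d / (2 * S) * S)%R with (d / 2)%R in Hd2 by (field; lra). lra. }
  assert (Hl3 : (lam * S * K <= eps / 2)%R).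
  { assert (He : (lam <= eps / (2 * S * K))%R) by (eapply Rle_trans; [apply Rmin_r | apply Rmin_r]).
    apply (Rmult_le_compat_r (S * K)) in He; [|apply Rmult_le_pos; lra].
    replace (eps / (2 * S * K) * (S * K))%R with (eps / 2)%R in He by (field; lra). lra. }
  assert (Hball : forall w, (Cmod (w - z) <= lam * S)%R -> (Cmod (g w) <= K)%R).
  { intros w Hw. specialize (Hdz w ltac:(lra)).
    replace (g w) with ((g w - g z) + g z) by ring.
    eapply Rle_trans; [apply Cmod_triangle|]. unfold K. lra. }
  exists lam. split; [lra|].
  eapply Rle_trans; [apply (tri_int_bound_ball g z (lam * S) K); [exact Hg | exact Hball | ..]|].
  - replace (z - z) with (RtoC 0) by ring. rewrite Cmod_0. apply Rmult_le_pos; lra.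
  - replace (z + RtoC lam * u - z) with (RtoC lam * u) by ring.
    rewrite Cmod_RtoC_scal by lra. apply Rmult_le_compat_l; unfold S; lra.
  - replace (z + RtoC lam * v - z) with (RtoC lam * v) by ring.
    rewrite Cmod_RtoC_scal by lra. apply Rmult_le_compat_l; unfold S; lra.
  - replace (z + RtoC lam * u - z) with (RtoC lam * u) by ring.
    replace (z + RtoC lam * v - (z + RtoC lam * u)) with (RtoC lam * (v - u)) by ring.
    replace (z - (z + RtoC lam * v)) with (RtoC (- lam) * v) by Cfield.
    rewrite !Cmod_mult, !Cmod_R, Rabs_Ropp, Rabs_right by lra.
    assert (0 <= lam * K)%R by (apply Rmult_le_pos; lra).
    unfold S in Hl3. nra.
Qed.

Section Vertex.

Variable g : C -> C.
Hypothesis g_cont : forall w, Ccont g w.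
Variable z : C.
Hypothesis g_diff : forall w, w <> z -> exists l, Cdiff g w l.

Lemma tri_int_vertex_collinear b c : cross (b - z) (c - z) = 0%R -> tri_int g z b c = 0.
Proof.
  intros Hc. destruct (Ceq_dec b z) as [->|Hb].
  - apply (tri_int_collinear g z (c - z) 0 0 1); [exact g_cont | Cfield..].
  - apply (tri_int_collinear g z (b - z) 0 1 (Re ((c - z) / (b - z))));
      [exact g_cont | Cfield | Cfield|].
    rewrite <- (cross_real_multiple (b - z) (c - z)) by (auto using Cminus_neq_0). ring.
Qed.

(* [L] is affine, vanishes at [z] and equals 1 on the line [b c]; Goursat applies to the
   triangles [b' b c] and [b' c c'], which lie in the half-plane [lam <= L] avoiding [z]. *)
Lemma tri_int_vertex_cut b c lam : cross (b - z) (c - z) <> 0%R -> (0 < lam <= 1)%R ->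
  tri_int g z b c = tri_int g z (z + RtoC lam * (b - z)) (z + RtoC lam * (c - z)).
Proof.
  intros HD Hlam. set (D := cross (b - z) (c - z)) in *.
  set (b' := z + RtoC lam * (b - z)). set (c' := z + RtoC lam * (c - z)).
  set (L := fun w => (cross (w - z) (c - b) / D)%R).
  set (P := fun w => (lam <= L w)%R).
  assert (P_mid : forall x y, P x -> P y -> P (mid x y)).
  { intros x y Hx Hy. unfold P, L, mid in *.
    replace (cross (x + RtoC (/ 2) * (y - x) - z) (c - b) / D)%R with
      ((cross (x - z) (c - b) / D + cross (y - z) (c - b) / D) / 2)%R
      by (unfold cross; simpl; field; exact HD).
    lra. }
  assert (P_closed : forall p,
      (forall eps, (0 < eps)%R -> exists w, P w /\ (Cmod (w - p) < eps)%R) -> P p)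
    by (intros p; apply cross_level_closed; exact HD).
  assert (P_diff : forall w, P w -> exists l, Cdiff g w l).
  { intros w Hw. apply g_diff. intros ->. unfold P, L in Hw.
    replace (cross (z - z) (c - b)) with 0%R in Hw by (unfold cross; simpl; ring).
    unfold Rdiv in Hw. rewrite Rmult_0_l in Hw. lra. }
  assert (Lb : L b = 1%R) by (unfold L, D, cross; simpl; field; exact HD).
  assert (Lc : L c = 1%R) by (unfold L, D, cross; simpl; field; exact HD).
  assert (Lb' : L b' = lam) by (unfold L, b', D, cross; simpl; field; exact HD).
  assert (Lc' : L c' = lam) by (unfold L, c', D, cross; simpl; field; exact HD).
  assert (G1 := goursat g g_cont P P_mid P_closed P_diff (Triangle b' b c)
    ltac:(unfold vertices_in, P; simpl; rewrite Lb', Lb, Lc; lra)).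
  assert (G2 := goursat g g_cont P P_mid P_closed P_diff (Triangle b' c c')
    ltac:(unfold vertices_in, P; simpl; rewrite Lb', Lc, Lc'; lra)).
  unfold tri_integral, tri_int in G1, G2; cbn [ta tb tc] in G1, G2. unfold tri_int.
  rewrite (seg_int_split g z b lam), (seg_int_split g c z (1 - lam)) by exact g_cont.
  replace (c + RtoC (1 - lam) * (z - c)) with c' by (unfold c'; Cfield).
  fold b'. rewrite (seg_int_swap g b' c) in G1 by exact g_cont.
  rewrite (seg_int_swap g b' c') in G2 by exact g_cont.
  transitivity (seg_int g z b' + seg_int g b' c' + seg_int g c' z
    + (seg_int g b' b + seg_int g b c + - seg_int g b' c)
    + (seg_int g b' c + seg_int g c c' + - seg_int g b' c')); [ring|].
  rewrite G1, G2. ring.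
Qed.

Lemma tri_int_vertex b c : tri_int g z b c = 0.
Proof.
  destruct (Req_dec (cross (b - z) (c - z)) 0) as [H|H]; [now apply tri_int_vertex_collinear|].
  apply Cmod_le_epsilon. intros eps Heps.
  destruct (tri_int_shrink g z (b - z) (c - z) g_cont eps Heps) as [lam [Hlam Hsmall]].
  now rewrite (tri_int_vertex_cut b c lam H Hlam).
Qed.

(* The vertex lemma makes [seg_int g z] additive along segments. *)
Lemma Cdiff_seg_int_from_vertex w : Cdiff (seg_int g z) w (g w).
Proof.
  intros eps Heps. destruct (g_cont w (eps / 4)%R ltac:(lra)) as [d [Hd0 Hd]].
  exists d. split; [exact Hd0|]. intros w' Hw'.
  assert (E : seg_int g z w' - seg_int g z w - g w * (w' - w)
              = seg_int (fun x => g x - g w) w w').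
  { rewrite seg_int_minus by (auto using Ccont_const).
    pose proof (tri_int_vertex w w') as V. unfold tri_int in V.
    rewrite (seg_int_swap g z w') in V by exact g_cont.
    rewrite seg_int_const.
    transitivity (seg_int g z w' - seg_int g z w - g w * (w' - w)
      + (seg_int g z w + seg_int g w w' + - seg_int g z w')); [rewrite V; ring | ring]. }
  rewrite E. eapply Rle_trans; [apply (seg_int_bound _ _ _ (eps / 4)%R)|].
  - intros; apply Ccont_minus; [apply g_cont | apply Ccont_const].
  - intros t Ht. left. apply Hd.
    assert (Hw0 : (Cmod (w - w) <= Cmod (w' - w))%R)
      by (replace (w - w) with (RtoC 0) by ring; rewrite Cmod_0; apply Cmod_ge_0).
    pose proof (Cmod_segment_le w w' w t _ Ht Hw0 (Rle_refl _)). lra.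
  - pose proof (Cmod_ge_0 (w' - w)). nra.
Qed.

End Vertex.

(** * Cauchy's formula and the regularity of entire functions *)

Lemma circle_int_primitive F g : (forall t, Cdiff F (circle t) (g (circle t))) ->
  (forall t, RCcont (fun s => g (circle s)) t) ->
  CInt (fun t => g (circle t) * (Ci * circle t)) 0 (2 * PI) = 0.
Proof.
  intros HF Hg.
  rewrite (CInt_ext _ (fun t => (Ci * circle t) * g (circle t))) by (intros; ring).
  rewrite (CInt_FTC (fun t => F (circle t))), circle_2PI; [ring | intros t _..].
  - apply RCdiff_comp; [apply HF | apply RCdiff_circle].
  - apply RCcont_mult; [|apply Hg].
    apply RCcont_mult; [apply RCcont_const | apply RCcont_circle].
Qed.

Lemma circle_int_vertex g z :
  (forall w, Ccont g w) -> (forall w, w <> z -> exists l, Cdiff g w l) ->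
  CInt (fun t => g (circle t) * (Ci * circle t)) 0 (2 * PI) = 0.
Proof.
  intros Hg Hd. apply (circle_int_primitive (seg_int g z)).
  - intros t. now apply Cdiff_seg_int_from_vertex.
  - intros t. apply RCcont_comp; [apply Hg | apply RCcont_circle].
Qed.

Definition cauchy1 (phi : R -> C) (z : C) : C :=
  CInt (fun t => phi t / (circle t - z)) 0 (2 * PI).
Definition cauchy2 (phi : R -> C) (z : C) : C :=
  CInt (fun t => phi t / ((circle t - z) * (circle t - z))) 0 (2 * PI).
Definition cauchy3 (phi : R -> C) (z : C) : C :=
  CInt (fun t => phi t / ((circle t - z) * (circle t - z) * (circle t - z))) 0 (2 * PI).

Lemma Cmod_circle_minus_ge z t : (1 - Cmod z <= Cmod (circle t - z))%R.
Proof. pose proof (Cmod_reverse_triangle (circle t) z). rewrite Cmod_circle in H. lra. Qed.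

Lemma circle_minus_neq_0 z t : (Cmod z < 1)%R -> circle t - z <> 0.
Proof. intros H E. pose proof (Cmod_circle_minus_ge z t). rewrite E, Cmod_0 in H0. lra. Qed.

Lemma RCcont_circle_minus z t : RCcont (fun s => circle s - z) t.
Proof. apply RCcont_minus; [apply RCcont_circle | apply RCcont_const]. Qed.

Lemma RCcont_bounded phi a b : (a <= b)%R -> (forall t, RCcont phi t) ->
  exists M, (0 <= M)%R /\ forall t, (a <= t <= b)%R -> (Cmod (phi t) <= M)%R.
Proof.
  intros Hab H.
  destruct (continuity_ab_maj (fun t => Cmod (phi t)) a b Hab) as [x [Hx _]].
  - intros c _ eps Heps. destruct (H c eps Heps) as [d [Hd H']]. exists d. split; [exact Hd|].
    intros s [_ Hs]. simpl in *. unfold R_dist in *. specialize (H' s Hs).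
    pose proof (Cmod_reverse_triangle (phi s) (phi c)).
    pose proof (Cmod_reverse_triangle (phi c) (phi s)). rewrite Cmod_minus_sym in H1.
    apply Rabs_lt_between'. lra.
  - exists (Cmod (phi x)). split; [apply Cmod_ge_0 | exact Hx].
Qed.

Lemma Cdiff_CInt (F : C -> R -> C) (F' : R -> C) z0 r B : (0 < r)%R -> (0 <= B)%R ->
  (forall z, (Cmod (z - z0) < r)%R -> ex_CInt (F z) 0 (2 * PI)) -> ex_CInt F' 0 (2 * PI) ->
  (forall z, (Cmod (z - z0) < r)%R -> forall t, (0 <= t <= 2 * PI)%R ->
     (Cmod (F z t - F z0 t - (z - z0) * F' t) <= Cmod (z - z0) * Cmod (z - z0) * B)%R) ->
  Cdiff (fun z => CInt (F z) 0 (2 * PI)) z0 (CInt F' 0 (2 * PI)).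
Proof.
  intros Hr HB Hok Hok' Hb eps Heps. pose proof PI_RGT_0.
  set (K := (2 * (2 * PI) * B + 1)%R). assert (HK : (0 < K)%R) by (unfold K; nra).
  exists (Rmin r (eps / K)). split; [apply Rmin_pos; [lra | now apply Rdiv_lt_0_compat]|].
  intros z Hz. apply Rlt_Rmin in Hz as [Hz1 Hz2].
  assert (Hr0 : (Cmod (z0 - z0) < r)%R)
    by (replace (z0 - z0) with (RtoC 0) by ring; rewrite Cmod_0; lra).
  assert (Hdiff : ex_CInt (fun t => F z t - F z0 t) 0 (2 * PI)) by (apply ex_CInt_minus; auto).
  rewrite (Cmult_comm (CInt F' 0 (2 * PI))), <- CInt_scal, <- CInt_minus, <- CInt_minus
    by (auto using ex_CInt_scal).
  eapply Rle_trans.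
  { apply (CInt_bound _ 0 (2 * PI) (Cmod (z - z0) * Cmod (z - z0) * B)%R); [lra| |].
    - apply ex_CInt_minus; [exact Hdiff | now apply ex_CInt_scal].
    - intros t Ht. now apply Hb. }
  pose proof (Cmod_ge_0 (z - z0)).
  assert (Cmod (z - z0) * K <= eps)%R.
  { apply (Rmult_lt_compat_r K) in Hz2; [|lra].
    replace (eps / K * K)%R with eps in Hz2 by (field; lra). lra. }
  unfold K in H1. nra.
Qed.

Lemma inv_minus_expansion1 (A d : C) : (/ 2 <= Cmod A)%R -> (/ 4 <= Cmod (A - d))%R ->
  (Cmod (/ (A - d) - / A - d * / (A * A)) <= Cmod d * Cmod d * 16)%R.
Proof.
  intros HA HAd.
  assert (NA : A <> 0) by (apply Cmod_gt_0; lra).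
  assert (NAd : A - d <> 0) by (apply Cmod_gt_0; lra).
  replace (/ (A - d) - / A - d * / (A * A)) with (d * d / ((A - d) * A * A)) by (field; now split).
  rewrite Cmod_div by (repeat apply Cmult_neq_0; assumption). rewrite !Cmod_mult.
  set (Q := (Cmod (A - d) * Cmod A * Cmod A)%R).
  assert (HQ : (/ 16 <= Q)%R).
  { apply Rle_trans with (/ 4 * / 2 * / 2)%R; [lra|].
    apply Rmult_le_compat; [lra | lra | apply Rmult_le_compat |]; lra. }
  apply (Rmult_le_reg_r Q); [lra|].
  unfold Rdiv. rewrite Rmult_assoc, Rinv_l, Rmult_1_r by lra.
  pose proof (Cmod_ge_0 d). assert (0 <= Cmod d * Cmod d)%R by nra. nra.
Qed.

Lemma inv_minus_expansion2 (A d : C) : (/ 2 <= Cmod A <= 3 / 2)%R -> (/ 4 <= Cmod (A - d))%R ->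
  (Cmod d <= / 4)%R ->
  (Cmod (/ ((A - d) * (A - d)) - / (A * A) - d * (2 * / (A * A * A))) <= Cmod d * Cmod d * 640)%R.
Proof.
  intros HA HAd Hd.
  assert (NA : A <> 0) by (apply Cmod_gt_0; lra).
  assert (NAd : A - d <> 0) by (apply Cmod_gt_0; lra).
  replace (/ ((A - d) * (A - d)) - / (A * A) - d * (2 * / (A * A * A)))
    with (d * d * (3 * A - 2 * d) / (A * A * A * ((A - d) * (A - d)))) by (field; now split).
  rewrite Cmod_div by (repeat apply Cmult_neq_0; assumption). rewrite !Cmod_mult.
  assert (H5 : (Cmod (3 * A - 2 * d) <= 5)%R).
  { eapply Rle_trans; [apply Cmod_minus_le|].
    rewrite !Cmod_mult, !Cmod_R, !Rabs_right by lra. lra. }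
  set (Q := (Cmod A * Cmod A * Cmod A * (Cmod (A - d) * Cmod (A - d)))%R).
  assert (HQ : (/ 128 <= Q)%R).
  { assert (/ 8 <= Cmod A * Cmod A * Cmod A)%R.
    { apply Rle_trans with (/ 2 * / 2 * / 2)%R; [lra|].
      apply Rmult_le_compat; [lra | lra | apply Rmult_le_compat |]; lra. }
    assert (/ 16 <= Cmod (A - d) * Cmod (A - d))%R.
    { apply Rle_trans with (/ 4 * / 4)%R; [lra | apply Rmult_le_compat; lra]. }
    apply Rle_trans with (/ 8 * / 16)%R; [lra|]. unfold Q. apply Rmult_le_compat; lra. }
  apply (Rmult_le_reg_r Q); [lra|].
  unfold Rdiv. rewrite Rmult_assoc, Rinv_l, Rmult_1_r by lra.
  pose proof (Cmod_ge_0 d). pose proof (Cmod_ge_0 (3 * A - 2 * d)).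
  assert (0 <= Cmod d * Cmod d)%R by nra. nra.
Qed.

Section CauchyTransform.

Variable phi : R -> C.
Hypothesis phi_cont : forall t, RCcont phi t.

Lemma ex_CInt_cauchy1 z : (Cmod z < 1)%R -> ex_CInt (fun t => phi t / (circle t - z)) 0 (2 * PI).
Proof.
  intros Hz. apply ex_CInt_RCcont. intros t _. apply RCcont_mult; [apply phi_cont|].
  apply RCcont_inv; [now apply circle_minus_neq_0 | apply RCcont_circle_minus].
Qed.

Lemma ex_CInt_cauchy2 z : (Cmod z < 1)%R ->
  ex_CInt (fun t => phi t / ((circle t - z) * (circle t - z))) 0 (2 * PI).
Proof.
  intros Hz. apply ex_CInt_RCcont. intros t _. apply RCcont_mult; [apply phi_cont|].
  apply RCcont_inv; [apply Cmult_neq_0; now apply circle_minus_neq_0|].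
  apply RCcont_mult; apply RCcont_circle_minus.
Qed.

Lemma ex_CInt_cauchy3 z : (Cmod z < 1)%R ->
  ex_CInt (fun t => phi t / ((circle t - z) * (circle t - z) * (circle t - z))) 0 (2 * PI).
Proof.
  intros Hz. apply ex_CInt_RCcont. intros t _. apply RCcont_mult; [apply phi_cont|].
  apply RCcont_inv; [repeat apply Cmult_neq_0; now apply circle_minus_neq_0|].
  repeat apply RCcont_mult; apply RCcont_circle_minus.
Qed.

Lemma Cdiff_cauchy1 z0 : (Cmod z0 < / 2)%R -> Cdiff (cauchy1 phi) z0 (cauchy2 phi z0).
Proof.
  intros Hz0.
  destruct (RCcont_bounded phi 0 (2 * PI) ltac:(pose proof PI_RGT_0; lra) phi_cont) as [M [HM0 HM]].
  apply (Cdiff_CInt (fun z t => phi t / (circle t - z)) _ z0 (/ 4) (16 * M)); [lra | lra | | |].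
  - intros z Hz. apply ex_CInt_cauchy1. pose proof (Cmod_reverse_triangle z z0). lra.
  - apply ex_CInt_cauchy2. lra.
  - intros z Hz t Ht. pose proof (Cmod_reverse_triangle z z0).
    pose proof (Cmod_circle_minus_ge z t). pose proof (Cmod_circle_minus_ge z0 t).
    set (A := circle t - z0) in *. set (d := z - z0) in *.
    replace (circle t - z) with (A - d) in * by (unfold A, d; ring).
    replace (phi t / (A - d) - phi t / A - d * (phi t / (A * A)))
      with (phi t * (/ (A - d) - / A - d * / (A * A))) by (unfold Cdiv; ring).
    rewrite Cmod_mult. pose proof (inv_minus_expansion1 A d ltac:(lra) ltac:(lra)).
    specialize (HM t Ht). pose proof (Cmod_ge_0 (phi t)).
    pose proof (Cmod_ge_0 (/ (A - d) - / A - d * / (A * A))).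
    assert (0 <= Cmod d * Cmod d)%R by (apply Rmult_le_pos; apply Cmod_ge_0). nra.
Qed.

Lemma Cdiff_cauchy2 z0 : (Cmod z0 < / 2)%R -> Cdiff (cauchy2 phi) z0 (2 * cauchy3 phi z0).
Proof.
  intros Hz0.
  destruct (RCcont_bounded phi 0 (2 * PI) ltac:(pose proof PI_RGT_0; lra) phi_cont) as [M [HM0 HM]].
  unfold cauchy3. rewrite <- CInt_scal by (apply ex_CInt_cauchy3; lra).
  apply (Cdiff_CInt (fun z t => phi t / ((circle t - z) * (circle t - z))) _ z0 (/ 4) (640 * M));
    [lra | lra | | |].
  - intros z Hz. apply ex_CInt_cauchy2. pose proof (Cmod_reverse_triangle z z0). lra.
  - apply ex_CInt_scal, ex_CInt_cauchy3. lra.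
  - intros z Hz t Ht. pose proof (Cmod_reverse_triangle z z0).
    pose proof (Cmod_circle_minus_ge z t). pose proof (Cmod_circle_minus_ge z0 t).
    assert (HA : (Cmod (circle t - z0) <= 3 / 2)%R).
    { eapply Rle_trans; [apply Cmod_minus_le|]. rewrite Cmod_circle. lra. }
    set (A := circle t - z0) in *. set (d := z - z0) in *.
    replace (circle t - z) with (A - d) in * by (unfold A, d; ring).
    replace (phi t / ((A - d) * (A - d)) - phi t / (A * A) - d * (2 * (phi t / (A * A * A))))
      with (phi t * (/ ((A - d) * (A - d)) - / (A * A) - d * (2 * / (A * A * A))))
      by (unfold Cdiv; ring).
    rewrite Cmod_mult. pose proof (inv_minus_expansion2 A d ltac:(lra) ltac:(lra) ltac:(lra)).
    specialize (HM t Ht). pose proof (Cmod_ge_0 (phi t)).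
    pose proof (Cmod_ge_0 (/ ((A - d) * (A - d)) - / (A * A) - d * (2 * / (A * A * A)))).
    assert (0 <= Cmod d * Cmod d)%R by (apply Rmult_le_pos; apply Cmod_ge_0). nra.
Qed.

End CauchyTransform.

Lemma RCcont_Ci_circle t : RCcont (fun s => Ci * circle s) t.
Proof. apply RCcont_mult; [apply RCcont_const | apply RCcont_circle]. Qed.

Lemma cauchy2_Ci_circle z : (Cmod z < 1)%R -> cauchy2 (fun t => Ci * circle t) z = 0.
Proof.
  intros Hz. unfold cauchy2.
  rewrite (CInt_ext _ (fun t => / ((circle t - z) * (circle t - z)) * (Ci * circle t)))
    by (intros; unfold Cdiv; ring).
  apply (circle_int_primitive (fun w => - / (w - z)) (fun w => / ((w - z) * (w - z)))).
  - intros t. assert (Hn := circle_minus_neq_0 z t Hz).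
    apply (Cdiff_eq _ _ (- ((1 - 0) * - / ((circle t - z) * (circle t - z))))); [field; exact Hn|].
    apply Cdiff_opp, (Cdiff_comp (fun x => / x) (fun w => w - z)); [now apply Cdiff_inv|].
    apply Cdiff_minus; [apply Cdiff_id | apply Cdiff_const].
  - intros t. apply RCcont_inv; [apply Cmult_neq_0; now apply circle_minus_neq_0|].
    apply RCcont_mult; apply RCcont_circle_minus.
Qed.

Lemma cauchy1_Ci_circle z :
  (Cmod z < / 2)%R -> cauchy1 (fun t => Ci * circle t) z = Ci * RtoC (2 * PI).
Proof.
  intros Hz.
  assert (H0 : cauchy1 (fun t => Ci * circle t) 0 = Ci * RtoC (2 * PI)).
  { unfold cauchy1. rewrite (CInt_ext _ (fun _ => Ci)), CInt_const by
      (intros t _; replace (circle t - 0) with (circle t) by ring; field;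
       intros E; pose proof (Cmod_circle t); rewrite E, Cmod_0 in H; lra).
    f_equal. f_equal. ring. }
  assert (E : CInt (fun _ => RtoC 0) 0 1
              = cauchy1 (fun t => Ci * circle t) (RtoC 1 * z)
                - cauchy1 (fun t => Ci * circle t) (RtoC 0 * z)).
  { apply (CInt_FTC (fun s => cauchy1 (fun t => Ci * circle t) (RtoC s * z))); intros s Hs;
      [|apply RCcont_const].
    rewrite Rmin_left, Rmax_right in Hs by lra.
    assert (Hsz : (Cmod (RtoC s * z) < / 2)%R).
    { rewrite Cmod_RtoC_scal by lra. pose proof (Cmod_ge_0 z). nra. }
    replace (RtoC 0) with (z * cauchy2 (fun t => Ci * circle t) (RtoC s * z))
      by (rewrite cauchy2_Ci_circle by lra; ring).
    apply (RCdiff_comp (cauchy1 (fun t => Ci * circle t)) (fun s => RtoC s * z)).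
    - apply Cdiff_cauchy1; [apply RCcont_Ci_circle | exact Hsz].
    - intros eps Heps. exists 1%R. split; [lra|]. intros s' _.
      replace (RtoC s' * z - RtoC s * z - RtoC (s' - s) * z) with (RtoC 0) by Cfield.
      rewrite Cmod_0. pose proof (Rabs_pos (s' - s)). nra. }
  rewrite CInt_const, Cmult_0_l in E.
  replace (RtoC 1 * z) with z in E by ring. replace (RtoC 0 * z) with (RtoC 0) in E by ring.
  rewrite <- H0. replace (cauchy1 (fun t => Ci * circle t) z)
    with (cauchy1 (fun t => Ci * circle t) z - cauchy1 (fun t => Ci * circle t) 0
          + cauchy1 (fun t => Ci * circle t) 0) by ring.
  rewrite <- E. ring.
Qed.

Definition slope (f : C -> C) (z w : C) : C :=
  if Ceq_dec w z then D f z else (f w - f z) / (w - z).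

Section Regularity.

Variable f : C -> C.
Hypothesis f_entire : entire f.

Let phi (t : R) : C := f (circle t) * (Ci * circle t).

Let RCcont_phi t : RCcont phi t.
Proof.
  apply RCcont_mult; [|apply RCcont_Ci_circle].
  apply RCcont_comp; [|apply RCcont_circle].
  exact (Cdiff_Ccont _ _ _ (entire_Cdiff f _ f_entire)).
Qed.

Lemma Cdiff_slope z w : w <> z -> exists l, Cdiff (slope f z) w l.
Proof.
  intros Hw. eexists.
  apply (Cdiff_ext_loc _ (fun w => (f w - f z) * / (w - z)) w _ (Cmod (w - z)));
    [now apply Cmod_gt_0, Cminus_neq_0| |].
  - intros w' Hw'. unfold slope. destruct (Ceq_dec w' z) as [->|]; [|reflexivity].
    rewrite Cmod_minus_sym in Hw'. lra.
  - apply (Cdiff_mult (fun w => f w - f z) (fun w => / (w - z))).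
    + apply Cdiff_minus; [now apply entire_Cdiff | apply Cdiff_const].
    + apply (Cdiff_comp (fun x => / x) (fun w => w - z)); [now apply Cdiff_inv, Cminus_neq_0|].
      apply Cdiff_minus; [apply Cdiff_id | apply Cdiff_const].
Qed.

Lemma Ccont_slope z w : Ccont (slope f z) w.
Proof.
  destruct (Ceq_dec w z) as [->|Hw].
  - intros eps Heps.
    destruct (entire_Cdiff f z f_entire (eps / 2)%R ltac:(lra)) as [d [Hd H']].
    exists d. split; [exact Hd|]. intros w Hw. unfold slope.
    destruct (Ceq_dec z z) as [_|]; [|congruence]. destruct (Ceq_dec w z) as [->|E].
    + replace (D f z - D f z) with (RtoC 0) by ring. rewrite Cmod_0. lra.
    + specialize (H' w Hw). assert (Hn := Cminus_neq_0 w z E).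
      assert (Hm : (0 < Cmod (w - z))%R) by now apply Cmod_gt_0.
      replace ((f w - f z) / (w - z) - D f z) with ((f w - f z - D f z * (w - z)) / (w - z))
        by (field; exact Hn).
      rewrite Cmod_div by exact Hn. apply (Rmult_lt_reg_r (Cmod (w - z))); [exact Hm|].
      unfold Rdiv. rewrite Rmult_assoc, Rinv_l by lra. nra.
  - destruct (Cdiff_slope z w Hw) as [l Hl]. exact (Cdiff_Ccont _ _ _ Hl).
Qed.

Lemma cauchy_formula z : (Cmod z < / 2)%R -> cauchy1 phi z = f z * (Ci * RtoC (2 * PI)).
Proof.
  intros Hz. assert (Hzn : forall t, circle t - z <> 0) by (intros; apply circle_minus_neq_0; lra).
  assert (H0 := circle_int_vertex (slope f z) z (Ccont_slope z) (Cdiff_slope z)).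
  rewrite (CInt_ext _ (fun t => phi t / (circle t - z) - f z * ((Ci * circle t) / (circle t - z))))
    in H0.
  2:{ intros t _. unfold slope, phi. destruct (Ceq_dec (circle t) z) as [E|E].
      - exfalso. apply (Hzn t). rewrite E. ring.
      - field. apply Hzn. }
  assert (Hphi : ex_CInt (fun t => phi t / (circle t - z)) 0 (2 * PI))
    by (apply ex_CInt_cauchy1; [exact RCcont_phi | lra]).
  assert (Hk : ex_CInt (fun t => (Ci * circle t) / (circle t - z)) 0 (2 * PI))
    by (apply ex_CInt_cauchy1; [exact RCcont_Ci_circle | lra]).
  rewrite (CInt_minus _ _ _ _ Hphi (ex_CInt_scal (f z) _ _ _ Hk)), (CInt_scal _ _ _ _ Hk) in H0.
  fold (cauchy1 phi z) in H0. fold (cauchy1 (fun t => Ci * circle t) z) in H0.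
  rewrite cauchy1_Ci_circle in H0 by exact Hz.
  replace (cauchy1 phi z)
    with (cauchy1 phi z - f z * (Ci * RtoC (2 * PI)) + f z * (Ci * RtoC (2 * PI)))
    by ring.
  rewrite H0. ring.
Qed.

Lemma D_eq_cauchy2 w : (Cmod w < / 2)%R -> D f w = cauchy2 phi w / (Ci * RtoC (2 * PI)).
Proof.
  intros Hw. apply Cdiff_D.
  apply (Cdiff_ext_loc f (fun z => cauchy1 phi z / (Ci * RtoC (2 * PI))) w _ (/ 2 - Cmod w)%R);
    [lra| |].
  - intros z Hz. pose proof (Cmod_reverse_triangle z w).
    rewrite cauchy_formula by lra. field. split; [|apply Ci_nz].
    intros E. apply RtoC_inj in E. pose proof PI_RGT_0. lra.
  - apply Cdiff_div_const, Cdiff_cauchy1; [exact RCcont_phi | exact Hw].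
Qed.

Lemma Cdiff_D_at_0 : exists l, Cdiff (D f) 0 l.
Proof.
  eexists.
  apply (Cdiff_ext_loc (D f) (fun w => cauchy2 phi w / (Ci * RtoC (2 * PI))) 0 _ (/ 2));
    [lra| |].
  - intros w Hw. replace (w - 0) with w in Hw by ring. now apply D_eq_cauchy2.
  - apply Cdiff_div_const, Cdiff_cauchy2; [exact RCcont_phi | rewrite Cmod_0; lra].
Qed.

End Regularity.

Lemma entire_D f : entire f -> entire (D f).
Proof.
  intros Hf z0. set (f0 := fun w => f (z0 + w)).
  assert (Hd0 : forall w, Cdiff f0 w (D f (z0 + w))).
  { intros w. apply (Cdiff_eq _ _ ((0 + 1) * D f (z0 + w))); [ring|].
    apply (Cdiff_comp f (fun w => z0 + w)); [now apply entire_Cdiff|].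
    apply Cdiff_plus; [apply Cdiff_const | apply Cdiff_id]. }
  assert (ED : forall w, D f0 w = D f (z0 + w)) by (intros; now apply Cdiff_D).
  destruct (Cdiff_D_at_0 f0) as [l Hl];
    [intros w; exists (D f (z0 + w)); now apply Cdiff_is_derive|].
  exists l. apply Cdiff_is_derive. intros eps Heps.
  destruct (Hl eps Heps) as [d [Hd H']]. exists d. split; [exact Hd|].
  intros w Hw. specialize (H' (w - z0)). rewrite !ED in H'.
  replace (z0 + (w - z0)) with w in H' by ring. replace (z0 + 0) with z0 in H' by ring.
  replace (w - z0 - 0) with (w - z0) in H' by ring. now apply H'.
Qed.

(** * The commutation relations *)

Ltac Cdiff_rules :=
  first
  [ apply Cdiff_id
  | apply Cdiff_const
  | match goal with H : forall z, Cdiff _ z _ |- _ => apply H end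
  | match goal with
    | |- Cdiff (fun z => @?u z * @?v z) _ _ => apply (Cdiff_mult u v); Cdiff_rules
    | |- Cdiff (fun z => @?u z + @?v z) _ _ => apply (Cdiff_plus u v); Cdiff_rules
    | |- Cdiff (fun z => @?u z - @?v z) _ _ => apply (Cdiff_minus u v); Cdiff_rules
    | |- Cdiff (fun z => @?u z / ?c) _ _ => apply (Cdiff_div_const u c); Cdiff_rules
    | |- Cdiff (fun z => - @?u z) _ _ => apply (Cdiff_opp u); Cdiff_rules
    | |- Cdiff (fun z => Cexp (@?u z)) _ _ =>
        apply (Cdiff_comp Cexp u); [apply Cdiff_Cexp | Cdiff_rules]
    end ].

Ltac commutator_identity ha :=
  apply functional_extensionality; intros ?z;
  cbv [comm subo compo mulop Nop Aplus Aminus Bplus Bminus Mop expAplus scalo addo zeroo];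
  repeat match goal with
    |- context [D ?h] =>
      match h with (fun _ => _) => erewrite (D_eq_of_Cdiff h); [|intro; Cdiff_rules] end
  end;
  cbv beta; rewrite ?RtoC_inv by exact ha; rewrite ?Cexp_opp_mult, ?Cexp_opp;
  field; repeat split;
  first [apply Cexp_nz | (let E := fresh in intro E; apply RtoC_inj in E; contradiction)].

Theorem mainTheorem4 (a : R) (ha : a <> 0%R) :
  let N := Nop a in let Ap := Aplus in let Am := Aminus a in
  let Bp := Bplus a in let Bm := Bminus a in let M := Mop in
  let eA := expAplus (RtoC a) in let emA := expAplus (- RtoC a) in
  let ia := RtoC (/ a) in
  forall f : C -> C, entire f ->
  comm N Ap f = scalo ia (subo eA M) f /\
  comm N Am f = scalo (-1) Am f /\
  comm Am Ap f = compo M eA f /\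
  comm N Bp f = scalo 2 Bp f /\
  comm N Bm f = subo (scalo (-2) Bm) (scalo (RtoC a) (compo Am N)) f /\
  comm Bm Bp f =
    subo (addo (scalo 2 (compo (addo M emA) N)) (scalo 2 M))
         (scalo (2 * RtoC a) (compo Am Bp)) f /\
  comm Ap Bm f =
    addo (scalo (-1) (compo (addo M eA) Am))
         (scalo (RtoC a) (compo eA (compo M N))) f /\
  comm Ap Bp f = zeroo f /\
  comm Am Bp f = scalo (2 * ia) (subo M emA) f /\
  comm Am Bm f = scalo (- RtoC a) (compo Am Am) f /\
  comm M N f = zeroo f /\ comm M Ap f = zeroo f /\ comm M Am f = zeroo f /\
  comm M Bp f = zeroo f /\ comm M Bm f = zeroo f /\ comm M M f = zeroo f.
Proof.
  cbv zeta. intros f Hf.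
  assert (Hf1 : entire (D f)) by now apply entire_D.
  assert (Hf2 : entire (D (D f))) by now apply entire_D.
  assert (H0 : forall z, Cdiff f z (D f z)) by (intros; now apply entire_Cdiff).
  assert (H1 : forall z, Cdiff (D f) z (D (D f) z)) by (intros; now apply entire_Cdiff).
  assert (H2 : forall z, Cdiff (D (D f)) z (D (D (D f)) z)) by (intros; now apply entire_Cdiff).
  clear Hf Hf1 Hf2.
  repeat split; commutator_identity ha.
Qed.
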